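(* For every scoring function $S$ and every integer $n\ge2$, $$\lambda_n(S)\le\lambda(S)\le\lambda_n(S)+c_n\|S\|_\delta\frac{\sqrt{\ln n}}{\sqrt n}+\frac{2\|S\|_\infty}{n},\qquad c_n=\sqrt{\frac{2\ln3+2\ln(n+2)}{\ln n}}.$$
   Context: Let $\mathcal{A}$ be a finite alphabet and $\mathcal{A}^*=\mathcal{A}\cup\{G\}$, where $G$ is a gap symbol. A scoring function is a symmetric map $S:\mathcal{A}^*\times\mathcal{A}^*\to\mathbb{R}$; $\|S\|_\delta=\max_{c,d,e\in\mathcal{A}^*}|S(c,d)-S(c,e)|$ and $\|S\|_\infty=\max_{c,d\in\mathcal{A}^*}|S(c,d)|$. For strings $x=x_1\dots x_m$, $y=y_1\dots y_{m'}$ over $\mathcal{A}$, an alignment $\pi$ is a sequence $((\mu_1,\nu_1),\dots,(\mu_k,\nu_k))$, $k\ge0$, with $1\le\mu_1<\dots<\mu_k\le m$ and $1\le\nu_1<\dots<\nu_k\le m'$; its score is $S_\pi(x,y)=\sum_{i=1}^k S(x_{\mu_i},y_{\nu_i})+\sum_{j\notin\{\mu_i\}}S(x_j,G)+\sum_{j\notin\{\nu_i\}}S(G,y_j)$, and $L_S(x,y)=\max_\pi S_\pi(x,y)$. Let $X_1,X_2,\dots,Y_1,Y_2,\dots$ be i.i.d. letters in $\mathcal{A}$. Put $L_n(S)=L_S(X_1\dots X_n,Y_1\dots Y_n)$, $\lambda_n(S)=E[L_n(S)]/n$ and $\lambda(S)=\lim_{n\to\infty}\lambda_n(S)$ (which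 exists). *)

From Stdlib Require Import Reals Lra Lia List Arith Compare_dec.
Import ListNotations.
Open Scope R_scope.

(* Alphabet: letters are the naturals 0..k-1 (k = |A|).
   Extended alphabet A* = A ∪ {G}: elements of [option nat],
   [Some a] a letter, [None] the gap symbol G. *)
Definition inA (k : nat) (c : option nat) : Prop :=
  match c with None => True | Some a => (a < k)%nat end.

Definition Astar (k : nat) : list (option nat) := None :: map Some (seq 0 k).

Definition scoring := option nat -> option nat -> R.

Definition is_scoring (k : nat) (S : scoring) : Prop :=
  forall c d, inA k c -> inA k d -> S c d = S d c.

Definition maxl (l : list R) : R := fold_right Rmax 0 l.

Definition norm_delta (k : nat) (S : scoring) : R :=
  maxl (flat_map (fun c => flat_map (fun d => map (fun e => Rabs (S c d - S c e))
          (Astar k)) (Astar k)) (Astar k)).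

Definition norm_inf (k : nat) (S : scoring) : R :=
  maxl (flat_map (fun c => map (fun d => Rabs (S c d)) (Astar k)) (Astar k)).

(* Alignments (0-based indices): lists of pairs (mu_i, nu_i) with
   mu_1 < ... < mu_k < m and nu_1 < ... < nu_k < m'. *)
Fixpoint incr (l : list nat) : Prop :=
  match l with
  | [] => True
  | a :: t => match t with [] => True | b :: _ => (a < b)%nat /\ incr t end
  end.

Definition is_alignment (m m' : nat) (pi : list (nat * nat)) : Prop :=
  incr (map fst pi) /\ incr (map snd pi) /\
  Forall (fun q => (fst q < m)%nat /\ (snd q < m')%nat) pi.

Fixpoint subseqs {T} (l : list T) : list (list T) :=
  match l with
  | [] => [[]]
  | a :: t => map (cons a) (subseqs t) ++ subseqs t
  end.

Definition all_pairs (m m' : nat) : list (nat * nat) :=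
  flat_map (fun i => map (fun j => (i, j)) (seq 0 m')) (seq 0 m).

Definition is_alignment_dec (m m' : nat) (pi : list (nat * nat)) :
  {is_alignment m m' pi} + {~ is_alignment m m' pi}.
Proof.
  unfold is_alignment.
  assert (Hi : forall l, {incr l} + {~ incr l}).
  { induction l as [|a t IH]; simpl; [left; exact I|].
    destruct t as [|b t']; [left; exact I|].
    destruct (lt_dec a b); destruct IH; tauto. }
  destruct (Hi (map fst pi)); [|right; tauto].
  destruct (Hi (map snd pi)); [|right; tauto].
  assert (Hq : forall q : nat * nat, {(fst q < m)%nat /\ (snd q < m')%nat} +
                          {~ ((fst q < m)%nat /\ (snd q < m')%nat)}).
  { intros q; destruct (lt_dec (fst q) m); destruct (lt_dec (snd q) m'); tauto. }
  destruct (Forall_dec _ Hq pi); [left; tauto | right; tauto].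
Defined.

(* every alignment is a subsequence of all_pairs m m'; this list is the
   list of all alignments of strings of lengths m and m' *)
Definition alignments (m m' : nat) : list (list (nat * nat)) :=
  filter (fun pi => if is_alignment_dec m m' pi then true else false)
         (subseqs (all_pairs m m')).

Definition sumR (l : list R) : R := fold_right Rplus 0 l.

Definition align_score (S : scoring) (x y : list nat) (pi : list (nat * nat)) : R :=
  sumR (map (fun q => S (Some (nth (fst q) x 0%nat)) (Some (nth (snd q) y 0%nat))) pi)
  + sumR (map (fun j => if in_dec Nat.eq_dec j (map fst pi) then 0
                        else S (Some (nth j x 0%nat)) None) (seq 0 (length x)))
  + sumR (map (fun j => if in_dec Nat.eq_dec j (map snd pi) then 0
                        else S None (Some (nth j y 0%nat))) (seq 0 (length y))).

(* L_S(x,y) = max over alignments (the empty alignment is always one) *)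
Definition LS (S : scoring) (x y : list nat) : R :=
  fold_right Rmax (align_score S x y [])
    (map (align_score S x y) (alignments (length x) (length y))).

Fixpoint words (k n : nat) : list (list nat) :=
  match n with
  | O => [[]]
  | S n' => flat_map (fun a => map (cons a) (words k n')) (seq 0 k)
  end.

Definition word_prob (p : nat -> R) (x : list nat) : R :=
  fold_right Rmult 1 (map p x).

(* E[L_n(S)] for X_i, Y_i i.i.d. with law p on {0,..,k-1} *)
Definition ELn (k : nat) (p : nat -> R) (S : scoring) (n : nat) : R :=
  sumR (flat_map (fun x => map (fun y => word_prob p x * word_prob p y * LS S x y)
                             (words k n)) (words k n)).

Definition lambda_n (k : nat) (p : nat -> R) (S : scoring) (n : nat) : R :=
  ELn k p S n / INR n.

Definition is_distribution (k : nat) (p : nat -> R) : Prop :=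
  (forall a, (a < k)%nat -> 0 <= p a) /\ sumR (map p (seq 0 k)) = 1.

Definition c_n (n : nat) : R :=
  sqrt ((2 * ln 3 + 2 * ln (INR n + 2)) / ln (INR n)).

(** Write [e a b] for the expected optimal score of two independent random
    words of lengths [a] and [b], so that [lambda_n = e n n / n].

    - The score [LS], a maximum over all alignments, equals the
      Needleman-Wunsch recursion [Ldp] ([LS_Ldp]).  From the recursion we read
      off superadditivity, the fact that an optimal alignment can be cut at any
      prescribed total length ([Ldp_cut]), symmetry, and that changing one
      letter changes the score by at most [||S||_delta].
    - Superadditivity gives [m e(n,n) <= e(mn,mn)], hence [lambda_n <= lambda_(mn)].
    - Conversely, an optimal alignment of two words of length [mn] splits into
      [2m] blocks of total size [n-1], [n] or [n+1].  For a fixed cut pattern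
      the sum of block scores has mean at most [m e(n,n) + 2m ||S||_inf] and
      bounded differences over the [2mn] letters, so Hoeffding's lemma
      (McDiarmid's argument) bounds its exponential moments.  A union bound over
      the at most [(3n+3)^(2m)] patterns, Jensen's inequality and optimisation
      of the exponent yield [lambda_(mn) <= lambda_n + rate n].
    - Hence [lambda := sup_n lambda_n] satisfies both inequalities of the
      theorem, and it is the limit because [rate n = O(n^(-1/4))]. *)

From Stdlib Require Import Reals Lra Lia List.
From Coquelicot Require Coquelicot.
Import ListNotations.
Open Scope R_scope.

Lemma sumR_cons (x : R) (l : list R) : sumR (x :: l) = x + sumR l.
Proof. reflexivity. Qed.

Lemma sumR_app (l1 l2 : list R) : sumR (l1 ++ l2) = sumR l1 + sumR l2.
Proof. induction l1 as [|a l1 IH]; simpl; [ring | rewrite IH; ring]. Qed.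

Lemma sumR_ext {A} (f g : A -> R) (l : list A) :
  (forall x, In x l -> f x = g x) -> sumR (map f l) = sumR (map g l).
Proof.
  induction l as [|a l IH]; simpl; intros H; [reflexivity|].
  rewrite H, IH by auto; reflexivity.
Qed.

Lemma sumR_plus {A} (f g : A -> R) (l : list A) :
  sumR (map (fun x => f x + g x) l) = sumR (map f l) + sumR (map g l).
Proof. induction l as [|a l IH]; simpl; [ring | rewrite IH; ring]. Qed.

Lemma sumR_scal {A} (c : R) (f : A -> R) (l : list A) :
  sumR (map (fun x => c * f x) l) = c * sumR (map f l).
Proof. induction l as [|a l IH]; simpl; [ring | rewrite IH; ring]. Qed.

Lemma sumR_le {A} (f g : A -> R) (l : list A) :
  (forall x, In x l -> f x <= g x) -> sumR (map f l) <= sumR (map g l).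
Proof.
  induction l as [|a l IH]; simpl; intros H; [lra|].
  pose proof (H a (or_introl eq_refl)); pose proof (IH (fun x Hx => H x (or_intror Hx))); lra.
Qed.

Lemma sumR_flat_map {A B} (h : B -> R) (f : A -> list B) (l : list A) :
  sumR (map h (flat_map f l)) = sumR (map (fun x => sumR (map h (f x))) l).
Proof.
  induction l as [|a l IH]; simpl; [reflexivity|].
  rewrite map_app, sumR_app, IH; reflexivity.
Qed.

Lemma sumR_swap {A B} (F : A -> B -> R) (l1 : list A) (l2 : list B) :
  sumR (map (fun x => sumR (map (fun y => F x y) l2)) l1)
  = sumR (map (fun y => sumR (map (fun x => F x y) l1)) l2).
Proof.
  induction l1 as [|a l1 IH]; simpl.
  - induction l2 as [|b l2 IH2]; simpl; [reflexivity | rewrite <- IH2; ring].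
  - rewrite IH, <- sumR_plus; reflexivity.
Qed.

Lemma sumR_nonneg {A} (f : A -> R) (l : list A) :
  (forall x, In x l -> 0 <= f x) -> 0 <= sumR (map f l).
Proof.
  induction l as [|a l IH]; simpl; intros H; [lra|].
  pose proof (H a (or_introl eq_refl)); pose proof (IH (fun x Hx => H x (or_intror Hx))); lra.
Qed.

Lemma sumR_ge_term {A} (F : A -> R) (l : list A) (a : A) :
  (forall x, In x l -> 0 <= F x) -> In a l -> F a <= sumR (map F l).
Proof.
  induction l as [|b l IH]; simpl; intros Hpos Ha; [destruct Ha|].
  pose proof (sumR_nonneg F l (fun x Hx => Hpos x (or_intror Hx))).
  destruct Ha as [<-|Ha]; [lra|].
  pose proof (Hpos b (or_introl eq_refl)); pose proof (IH (fun x Hx => Hpos x (or_intror Hx)) Ha); lra.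
Qed.

Lemma sumR_le_length {A} (F : A -> R) (l : list A) (X : R) :
  (forall x, In x l -> F x <= X) -> sumR (map F l) <= INR (length l) * X.
Proof.
  induction l as [|a l IH]; intros H; simpl map; simpl length; [simpl; lra|].
  rewrite S_INR; simpl sumR.
  pose proof (H a (or_introl eq_refl)); pose proof (IH (fun x Hx => H x (or_intror Hx))); lra.
Qed.

Lemma fold_Rmax_le (l : list R) (b M : R) :
  b <= M -> (forall x, In x l -> x <= M) -> fold_right Rmax b l <= M.
Proof. induction l; simpl; intros H1 H2; auto. apply Rmax_lub; auto. Qed.

Lemma fold_Rmax_ge (l : list R) (b x : R) : In x l -> x <= fold_right Rmax b l.
Proof.
  induction l as [|a l IH]; simpl; intros H; [destruct H|].
  destruct H as [<-|H]; [apply Rmax_l|].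
  eapply Rle_trans; [apply IH; auto | apply Rmax_r].
Qed.

Lemma maxl_nonneg (l : list R) : 0 <= maxl l.
Proof. induction l; simpl; [lra|]. eapply Rle_trans; [eassumption | apply Rmax_r]. Qed.

Lemma fold_Rmin_le (b : R) (l : list R) (x : R) : In x l -> fold_right Rmin b l <= x.
Proof.
  induction l as [|a l IH]; simpl; intros H; [destruct H|].
  destruct H as [<-|H]; [apply Rmin_l | eapply Rle_trans; [apply Rmin_r | auto]].
Qed.

Lemma fold_Rmin_in (b : R) (l : list R) : fold_right Rmin b l = b \/ In (fold_right Rmin b l) l.
Proof.
  induction l as [|a l IH]; simpl; auto.
  destruct (Rle_dec a (fold_right Rmin b l)).
  - rewrite Rmin_left by lra; right; left; auto.
  - rewrite Rmin_right by lra; destruct IH; auto.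
Qed.

Lemma Rmax_or (a b : R) : Rmax a b = a \/ Rmax a b = b.
Proof. unfold Rmax; destruct (Rle_dec a b); auto. Qed.

(** * The alignment score as a dynamic programme

    [Ldp] is the Needleman-Wunsch recursion: an optimal alignment of [a :: x]
    and [b :: y] either matches [a] with [b], or leaves [a] unmatched, or leaves
    [b] unmatched. *)

Section DynamicProgramme.
Variable Sc : scoring.

Fixpoint Ldp (x y : list nat) : R :=
  match x with
  | [] => fold_right (fun b r => Sc None (Some b) + r) 0 y
  | a :: x' =>
      (fix Ldp_x (y : list nat) : R :=
         match y with
         | [] => Sc (Some a) None + Ldp x' []
         | b :: y' => Rmax (Sc (Some a) (Some b) + Ldp x' y')
                          (Rmax (Sc (Some a) None + Ldp x' (b :: y'))
                                (Sc None (Some b) + Ldp_x y'))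
         end) y
  end.

Lemma Ldp_nil_nil : Ldp [] [] = 0.
Proof. reflexivity. Qed.
Lemma Ldp_nil_cons b y : Ldp [] (b :: y) = Sc None (Some b) + Ldp [] y.
Proof. reflexivity. Qed.
Lemma Ldp_cons_nil a x : Ldp (a :: x) [] = Sc (Some a) None + Ldp x [].
Proof. reflexivity. Qed.
Lemma Ldp_cons_cons a x b y :
  Ldp (a :: x) (b :: y) = Rmax (Sc (Some a) (Some b) + Ldp x y)
    (Rmax (Sc (Some a) None + Ldp x (b :: y)) (Sc None (Some b) + Ldp (a :: x) y)).
Proof. reflexivity. Qed.

Definition shift (dx dy : nat) (pi : list (nat * nat)) : list (nat * nat) :=
  map (fun q => (dx + fst q, dy + snd q)%nat) pi.
Definition unshift (dx dy : nat) (pi : list (nat * nat)) : list (nat * nat) :=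
  map (fun q => (fst q - dx, snd q - dy)%nat) pi.

Lemma seq_0_S n : seq 0 (S n) = 0%nat :: map S (seq 0 n).
Proof. simpl; rewrite seq_shift; reflexivity. Qed.

Lemma gap_shift (T : nat -> R) (l : list nat) n :
  sumR (map (fun j => if in_dec Nat.eq_dec j (map S l) then 0 else T j) (seq 0 (S n)))
  = T 0%nat + sumR (map (fun j => if in_dec Nat.eq_dec j l then 0 else T (S j)) (seq 0 n)).
Proof.
  rewrite seq_0_S, map_cons, sumR_cons.
  destruct (in_dec Nat.eq_dec 0%nat (map S l)) as [Hi|_].
  { apply in_map_iff in Hi; destruct Hi as [? [? _]]; discriminate. }
  f_equal; rewrite map_map; apply sumR_ext; intros j _.
  destruct (in_dec Nat.eq_dec (S j) (map S l)) as [H1|H1], (in_dec Nat.eq_dec j l) as [H2|H2]; auto.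
  - apply in_map_iff in H1; destruct H1 as [j' [E H]]; injection E as ->; contradiction.
  - exfalso; apply H1, in_map; auto.
Qed.

Lemma gap_shift_matched (T : nat -> R) (l : list nat) n :
  sumR (map (fun j => if in_dec Nat.eq_dec j (0%nat :: map S l) then 0 else T j) (seq 0 (S n)))
  = sumR (map (fun j => if in_dec Nat.eq_dec j l then 0 else T (S j)) (seq 0 n)).
Proof.
  rewrite seq_0_S, map_cons, sumR_cons.
  destruct (in_dec Nat.eq_dec 0%nat (0%nat :: map S l)) as [_|Hi]; [|exfalso; apply Hi; left; auto].
  rewrite Rplus_0_l, map_map; apply sumR_ext; intros j _.
  destruct (in_dec Nat.eq_dec (S j) (0%nat :: map S l)) as [H1|H1], (in_dec Nat.eq_dec j l) as [H2|H2]; auto.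
  - destruct H1 as [H1|H1]; [discriminate|].
    apply in_map_iff in H1; destruct H1 as [j' [E H]]; injection E as ->; contradiction.
  - exfalso; apply H1; right; apply in_map; auto.
Qed.

Lemma fst_shift dx dy pi : map fst (shift dx dy pi) = map (fun i => dx + i)%nat (map fst pi).
Proof. unfold shift; rewrite !map_map; reflexivity. Qed.
Lemma snd_shift dx dy pi : map snd (shift dx dy pi) = map (fun i => dy + i)%nat (map snd pi).
Proof. unfold shift; rewrite !map_map; reflexivity. Qed.
Lemma map_add0 (l : list nat) : map (fun i => 0 + i)%nat l = l.
Proof. apply map_id. Qed.

Lemma score_shift_x a x y pi :
  align_score Sc (a :: x) y (shift 1 0 pi) = Sc (Some a) None + align_score Sc x y pi.
Proof.
  unfold align_score; simpl length; rewrite fst_shift, snd_shift, map_add0.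
  change (map (fun i => 1 + i)%nat) with (map S); rewrite gap_shift.
  unfold shift; rewrite map_map; simpl; ring.
Qed.

Lemma score_shift_y b x y pi :
  align_score Sc x (b :: y) (shift 0 1 pi) = Sc None (Some b) + align_score Sc x y pi.
Proof.
  unfold align_score; simpl length; rewrite fst_shift, snd_shift, map_add0.
  change (map (fun i => 1 + i)%nat) with (map S); rewrite gap_shift.
  unfold shift; rewrite map_map; simpl; ring.
Qed.

Lemma score_match a b x y pi :
  align_score Sc (a :: x) (b :: y) ((0, 0)%nat :: shift 1 1 pi)
  = Sc (Some a) (Some b) + align_score Sc x y pi.
Proof.
  unfold align_score; simpl length; rewrite !map_cons, fst_shift, snd_shift.
  change (map (fun i => 1 + i)%nat) with (map S); simpl fst; simpl snd.
  rewrite !gap_shift_matched, sumR_cons.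
  unfold shift; rewrite map_map; simpl; ring.
Qed.

End DynamicProgramme.

Lemma incr_Forall a l : incr (a :: l) -> Forall (lt a) l.
Proof.
  revert a; induction l as [|b l IH]; intros a H; constructor.
  - destruct H; auto.
  - destruct H as [H1 H2]; eapply Forall_impl; [|exact (IH b H2)]; simpl; lia.
Qed.

Lemma incr_tail a l : incr (a :: l) -> incr l.
Proof. destruct l; simpl; tauto. Qed.

Lemma incr_cons a l : Forall (lt a) l -> incr l -> incr (a :: l).
Proof. destruct l; simpl; [auto|]. intros H; inversion H; auto. Qed.

Lemma incr_map_add d l : incr l -> incr (map (fun i => d + i)%nat l).
Proof. induction l as [|a [|b l] IH]; simpl; auto. intros [H1 H2]; split; [lia | apply IH; auto]. Qed.

Lemma incr_map_sub d l : Forall (le d) l -> incr l -> incr (map (fun i => i - d)%nat l).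
Proof.
  induction l as [|a [|b l] IH]; simpl; auto. intros HF [H1 H2].
  inversion HF as [|? ? Ha HF']; inversion HF'; subst; split; [lia | apply IH; auto].
Qed.

Lemma al_nil m m' : is_alignment m m' [].
Proof. repeat split; simpl; auto. Qed.

Lemma al_empty_x m' pi : is_alignment 0 m' pi -> pi = [].
Proof. intros [_ [_ H]]; destruct pi; auto; inversion H; lia. Qed.

Lemma al_empty_y m pi : is_alignment m 0 pi -> pi = [].
Proof. intros [_ [_ H]]; destruct pi; auto; inversion H; lia. Qed.

Lemma al_shift dx dy m m' pi :
  is_alignment m m' pi -> is_alignment (dx + m) (dy + m') (shift dx dy pi).
Proof.
  intros [H1 [H2 H3]]; repeat split.
  - rewrite fst_shift; apply incr_map_add; auto.
  - rewrite snd_shift; apply incr_map_add; auto.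
  - unfold shift; rewrite Forall_map; eapply Forall_impl; [|exact H3]; simpl; lia.
Qed.

Lemma al_match m m' pi :
  is_alignment m m' pi -> is_alignment (S m) (S m') ((0, 0)%nat :: shift 1 1 pi).
Proof.
  intros Hpi; destruct (al_shift 1 1 _ _ _ Hpi) as [H1 [H2 H3]]; repeat split; simpl map.
  - apply incr_cons; auto. rewrite fst_shift, Forall_map; apply Forall_forall; intros; lia.
  - apply incr_cons; auto. rewrite snd_shift, Forall_map; apply Forall_forall; intros; lia.
  - constructor; simpl; auto; lia.
Qed.

Lemma fst_unshift dx dy pi : map fst (unshift dx dy pi) = map (fun i => i - dx)%nat (map fst pi).
Proof. unfold unshift; rewrite !map_map; reflexivity. Qed.
Lemma snd_unshift dx dy pi : map snd (unshift dx dy pi) = map (fun i => i - dy)%nat (map snd pi).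
Proof. unfold unshift; rewrite !map_map; reflexivity. Qed.

Lemma al_unshift dx dy m m' pi :
  is_alignment (dx + m) (dy + m') pi -> Forall (fun q => dx <= fst q /\ dy <= snd q)%nat pi ->
  pi = shift dx dy (unshift dx dy pi) /\ is_alignment m m' (unshift dx dy pi).
Proof.
  intros [H1 [H2 H3]] Hge; split; [|repeat split].
  - unfold shift, unshift; rewrite map_map, <- (map_id pi) at 1.
    apply map_ext_in; intros [i j] Hin; rewrite Forall_forall in Hge.
    specialize (Hge _ Hin); simpl in *; f_equal; lia.
  - rewrite fst_unshift.
    apply incr_map_sub; auto; rewrite Forall_map; eapply Forall_impl; [|exact Hge]; simpl; tauto.
  - rewrite snd_unshift.
    apply incr_map_sub; auto; rewrite Forall_map; eapply Forall_impl; [|exact Hge]; simpl; tauto.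
  - unfold unshift; rewrite Forall_map; rewrite Forall_forall in *.
    intros q Hq; specialize (H3 _ Hq); specialize (Hge _ Hq); simpl; lia.
Qed.

Lemma al_decomp m m' pi : is_alignment (S m) (S m') pi ->
  (exists pi', pi = shift 1 0 pi' /\ is_alignment m (S m') pi') \/
  (exists pi', pi = shift 0 1 pi' /\ is_alignment (S m) m' pi') \/
  (exists pi', pi = (0, 0)%nat :: shift 1 1 pi' /\ is_alignment m m' pi').
Proof.
  intros Hpi; destruct pi as [|[i j] rho].
  { left; exists []; split; [reflexivity | apply al_nil]. }
  pose proof Hpi as [H1 [H2 H3]]; simpl in H1, H2.
  apply incr_Forall in H1, H2; rewrite Forall_map in H1, H2.
  destruct i as [|i]; [destruct j as [|j]|].
  - right; right.
    assert (Hrho : is_alignment (1 + m) (1 + m') rho).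
    { destruct Hpi as [G1 [G2 G3]]; simpl in G1, G2.
      repeat split; [exact (incr_tail _ _ G1) | exact (incr_tail _ _ G2) | inversion G3; auto]. }
    destruct (al_unshift 1 1 m m' rho Hrho) as [E Hal].
    { rewrite Forall_forall in *; intros q Hq; split; [apply H1 | apply H2]; auto. }
    exists (unshift 1 1 rho); split; [rewrite <- E|]; auto.
  - right; left. destruct (al_unshift 0 1 (S m) m' _ Hpi) as [E Hal].
    { constructor; [simpl; lia|]; rewrite Forall_forall in *.
      intros q Hq; specialize (H2 q Hq); simpl in *; lia. }
    exists (unshift 0 1 ((0%nat, S j) :: rho)); auto.
  - left. destruct (al_unshift 1 0 m (S m') _ Hpi) as [E Hal].
    { constructor; [simpl; lia|]; rewrite Forall_forall in *.
      intros q Hq; specialize (H1 q Hq); simpl in *; lia. }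
    exists (unshift 1 0 ((S i, j) :: rho)); auto.
Qed.

Lemma score_le_Ldp Sc x : forall y pi, is_alignment (length x) (length y) pi ->
  align_score Sc x y pi <= Ldp Sc x y.
Proof.
  induction x as [|a x IHx]; intros y; induction y as [|b y IHy]; intros pi Hpi;
    simpl length in Hpi.
  - rewrite (al_empty_x _ _ Hpi); unfold align_score; simpl; lra.
  - rewrite (al_empty_x _ _ Hpi); change (@nil (nat * nat)) with (shift 0 1 []).
    rewrite score_shift_y, Ldp_nil_cons; specialize (IHy [] (al_nil _ _)); lra.
  - rewrite (al_empty_y _ _ Hpi); change (@nil (nat * nat)) with (shift 1 0 []).
    rewrite score_shift_x, Ldp_cons_nil; specialize (IHx [] [] (al_nil _ _)); lra.
  - rewrite Ldp_cons_cons.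
    destruct (al_decomp _ _ _ Hpi) as [[pi' [-> H]] | [[pi' [-> H]] | [pi' [-> H]]]].
    + rewrite score_shift_x; specialize (IHx (b :: y) pi' H).
      eapply Rle_trans; [|apply Rmax_r]; eapply Rle_trans; [|apply Rmax_l]; lra.
    + rewrite score_shift_y; specialize (IHy pi' H).
      eapply Rle_trans; [|apply Rmax_r]; eapply Rle_trans; [|apply Rmax_r]; lra.
    + rewrite score_match; specialize (IHx y pi' H).
      eapply Rle_trans; [|apply Rmax_l]; lra.
Qed.

Lemma Ldp_attained Sc x : forall y, exists pi,
  is_alignment (length x) (length y) pi /\ align_score Sc x y pi = Ldp Sc x y.
Proof.
  induction x as [|a x IHx]; intros y; induction y as [|b y IHy].
  - exists []; split; [apply al_nil | unfold align_score; simpl; ring].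
  - destruct IHy as [pi [H E]]; exists (shift 0 1 pi).
    split; [apply (al_shift 0 1); auto | rewrite score_shift_y, Ldp_nil_cons, E; auto].
  - destruct (IHx []) as [pi [H E]]; exists (shift 1 0 pi).
    split; [apply (al_shift 1 0); auto | rewrite score_shift_x, Ldp_cons_nil, E; auto].
  - rewrite Ldp_cons_cons.
    destruct (Rmax_or (Sc (Some a) (Some b) + Ldp Sc x y)
       (Rmax (Sc (Some a) None + Ldp Sc x (b :: y)) (Sc None (Some b) + Ldp Sc (a :: x) y)))
      as [E1|E1]; rewrite E1.
    + destruct (IHx y) as [pi [H E]]; exists ((0, 0)%nat :: shift 1 1 pi).
      split; [apply al_match; auto | rewrite score_match, E; auto].
    + destruct (Rmax_or (Sc (Some a) None + Ldp Sc x (b :: y)) (Sc None (Some b) + Ldp Sc (a :: x) y))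
        as [E2|E2]; rewrite E2.
      * destruct (IHx (b :: y)) as [pi [H E]]; exists (shift 1 0 pi).
        split; [apply (al_shift 1 0); auto | rewrite score_shift_x, E; auto].
      * destruct IHy as [pi [H E]]; exists (shift 0 1 pi).
        split; [apply (al_shift 0 1); auto | rewrite score_shift_y, E; auto].
Qed.

Lemma subseqs_nil {T} (l : list T) : In [] (subseqs l).
Proof. induction l; simpl; auto. apply in_app_iff; right; auto. Qed.

Lemma subseqs_app {T} (l1 l2 s1 s2 : list T) :
  In s1 (subseqs l1) -> In s2 (subseqs l2) -> In (s1 ++ s2) (subseqs (l1 ++ l2)).
Proof.
  revert s1; induction l1 as [|a t IH]; intros s1 H1 H2; simpl in *.
  - destruct H1 as [<-|[]]; auto.
  - apply in_app_iff in H1; apply in_app_iff; destruct H1 as [H1|H1]; [left|right; auto].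
    apply in_map_iff in H1; destruct H1 as [s [<- Hs]]; simpl; apply in_map; auto.
Qed.

Lemma subseqs_single {T} (l : list T) z : In z l -> In [z] (subseqs l).
Proof.
  induction l as [|a t IH]; simpl; intros H; [destruct H|].
  apply in_app_iff; destruct H as [<-|H]; [left; apply in_map, subseqs_nil | right; auto].
Qed.

Lemma incr_app_inv l z : incr (l ++ [z]) -> incr l /\ Forall (fun a => a < z)%nat l.
Proof.
  induction l as [|a [|b l] IH]; simpl; intros H; [split; auto| |].
  - split; [exact I | repeat constructor; tauto].
  - destruct H as [H1 H2]; destruct (IH H2) as [I1 F1]; split; [split; auto|].
    constructor; auto; inversion F1; lia.
Qed.

Lemma all_pairs_S m m' :
  all_pairs (S m) m' = all_pairs m m' ++ map (fun j => (m, j)) (seq 0 m').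
Proof. unfold all_pairs; rewrite seq_S, flat_map_app; simpl; rewrite app_nil_r; reflexivity. Qed.

Lemma al_restrict m m' pi :
  is_alignment (S m) m' pi -> Forall (fun q => fst q < m)%nat pi -> is_alignment m m' pi.
Proof.
  intros [H1 [H2 H3]] H; repeat split; auto.
  rewrite Forall_forall in *; intros q Hq; specialize (H3 q Hq); specialize (H q Hq); lia.
Qed.

Lemma al_subseqs m : forall m' pi, is_alignment m m' pi -> In pi (subseqs (all_pairs m m')).
Proof.
  induction m as [|m IH]; intros m' pi Hpi; [rewrite (al_empty_x _ _ Hpi); apply subseqs_nil|].
  rewrite all_pairs_S; destruct pi as [|[i j] pi0 _] using rev_ind; [apply subseqs_nil|].
  pose proof Hpi as [H1 [H2 H3]]; rewrite map_app in H1, H2.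
  apply incr_app_inv in H1 as [I1 F1], H2 as [I2 F2]; rewrite Forall_map in F1, F2.
  apply Forall_app in H3 as [H3 H4]; inversion H4 as [|? ? Hij _]; destruct Hij as [Hi Hj]; simpl in Hi, Hj.
  destruct (Nat.eq_dec i m) as [->|Him].
  - apply subseqs_app; [|apply subseqs_single, in_map, in_seq; lia].
    apply (IH m'), al_restrict; [repeat split; auto | auto].
  - rewrite <- app_nil_r at 1; apply subseqs_app; [|apply subseqs_nil].
    apply (IH m'), al_restrict; auto.
    apply Forall_app; split; [|constructor; simpl; auto; lia].
    eapply Forall_impl; [|exact F1]; simpl; lia.
Qed.

Lemma in_alignments m m' pi : In pi (alignments m m') <-> is_alignment m m' pi.
Proof.
  unfold alignments; rewrite filter_In.
  destruct (is_alignment_dec m m' pi) as [H|H]; split; try tauto.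
  - intros; split; [apply al_subseqs|]; auto.
  - intros [_ E]; discriminate.
Qed.

Theorem LS_Ldp Sc x y : LS Sc x y = Ldp Sc x y.
Proof.
  apply Rle_antisym; unfold LS.
  - apply fold_Rmax_le; [apply score_le_Ldp, al_nil|].
    intros r Hr; apply in_map_iff in Hr; destruct Hr as [pi [<- Hpi]].
    apply score_le_Ldp, in_alignments; auto.
  - destruct (Ldp_attained Sc x y) as [pi [H <-]].
    apply fold_Rmax_ge, in_map, in_alignments; auto.
Qed.

Section ScoreStructure.
Variable Sc : scoring.

Lemma Ldp_gap_x a x y : Sc (Some a) None + Ldp Sc x y <= Ldp Sc (a :: x) y.
Proof.
  destruct y as [|b y]; [rewrite Ldp_cons_nil; lra|].
  rewrite Ldp_cons_cons; eapply Rle_trans; [|apply Rmax_r]; apply Rmax_l.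
Qed.

Lemma Ldp_gap_y b x y : Sc None (Some b) + Ldp Sc x y <= Ldp Sc x (b :: y).
Proof.
  destruct x as [|a x]; [rewrite Ldp_nil_cons; lra|].
  rewrite Ldp_cons_cons; eapply Rle_trans; [|apply Rmax_r]; apply Rmax_r.
Qed.

Lemma Ldp_match a b x y : Sc (Some a) (Some b) + Ldp Sc x y <= Ldp Sc (a :: x) (b :: y).
Proof. rewrite Ldp_cons_cons; apply Rmax_l. Qed.

(** Superadditivity: concatenating alignments of the pieces aligns the whole. *)
Lemma Ldp_superadd x1 : forall y1 x2 y2,
  Ldp Sc x1 y1 + Ldp Sc x2 y2 <= Ldp Sc (x1 ++ x2) (y1 ++ y2).
Proof.
  induction x1 as [|a x1 IHx]; intros y1; induction y1 as [|b y1 IHy]; intros x2 y2; simpl app.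
  - rewrite Ldp_nil_nil; lra.
  - rewrite Ldp_nil_cons; specialize (IHy x2 y2); simpl app in IHy.
    pose proof (Ldp_gap_y b x2 (y1 ++ y2)); lra.
  - rewrite Ldp_cons_nil; specialize (IHx [] x2 y2); simpl app in IHx.
    pose proof (Ldp_gap_x a (x1 ++ x2) y2); lra.
  - rewrite Ldp_cons_cons; repeat apply Rmax_case.
    + specialize (IHx y1 x2 y2); pose proof (Ldp_match a b (x1 ++ x2) (y1 ++ y2)); lra.
    + specialize (IHx (b :: y1) x2 y2); simpl app in IHx.
      pose proof (Ldp_gap_x a (x1 ++ x2) (b :: y1 ++ y2)); lra.
    + specialize (IHy x2 y2); simpl app in IHy.
      pose proof (Ldp_gap_y b (a :: x1 ++ x2) (y1 ++ y2)); lra.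
Qed.

(** [cut_at x y s]: an optimal alignment of [x] and [y] can be cut into an
    alignment of prefixes of total length [s] or [s - 1] and one of the suffixes. *)
Definition cut_at (x y : list nat) (s : nat) : Prop :=
  exists x1 x2 y1 y2, x = x1 ++ x2 /\ y = y1 ++ y2 /\
    (length x1 + length y1 = s \/ length x1 + length y1 + 1 = s)%nat /\
    Ldp Sc x y <= Ldp Sc x1 y1 + Ldp Sc x2 y2.

Lemma cut_at_small x y s : (s <= 1)%nat -> cut_at x y s.
Proof.
  intros Hs; exists [], x, [], y; split; [|split; [|split]]; auto; [simpl; lia|].
  rewrite Ldp_nil_nil; lra.
Qed.

Lemma cut_at_gap_x a x y s :
  Ldp Sc (a :: x) y <= Sc (Some a) None + Ldp Sc x y -> cut_at x y s -> cut_at (a :: x) y (S s).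
Proof.
  intros HL [x1 [x2 [y1 [y2 [-> [-> [Hs Hc]]]]]]].
  exists (a :: x1), x2, y1, y2; repeat split; [simpl; lia|].
  pose proof (Ldp_gap_x a x1 y1); lra.
Qed.

Lemma cut_at_gap_y b x y s :
  Ldp Sc x (b :: y) <= Sc None (Some b) + Ldp Sc x y -> cut_at x y s -> cut_at x (b :: y) (S s).
Proof.
  intros HL [x1 [x2 [y1 [y2 [-> [-> [Hs Hc]]]]]]].
  exists x1, x2, (b :: y1), y2; repeat split; [simpl; lia|].
  pose proof (Ldp_gap_y b x1 y1); lra.
Qed.

Lemma cut_at_match a b x y s :
  Ldp Sc (a :: x) (b :: y) <= Sc (Some a) (Some b) + Ldp Sc x y -> cut_at x y s ->
  cut_at (a :: x) (b :: y) (S (S s)).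
Proof.
  intros HL [x1 [x2 [y1 [y2 [-> [-> [Hs Hc]]]]]]].
  exists (a :: x1), x2, (b :: y1), y2; repeat split; [simpl; lia|].
  pose proof (Ldp_match a b x1 y1); lra.
Qed.

Lemma Ldp_cut x : forall y s, (s <= length x + length y)%nat -> cut_at x y s.
Proof.
  induction x as [|a x IHx]; intros y; induction y as [|b y IHy]; intros s Hs;
    (destruct s as [|s]; [apply cut_at_small; lia|]); simpl length in Hs.
  - lia.
  - apply cut_at_gap_y; [rewrite Ldp_nil_cons; lra | apply IHy; lia].
  - apply cut_at_gap_x; [rewrite Ldp_cons_nil; lra | apply IHx; simpl; lia].
  - pose proof (Ldp_cons_cons Sc a x b y) as HL.
    destruct (Rmax_or (Sc (Some a) (Some b) + Ldp Sc x y)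
       (Rmax (Sc (Some a) None + Ldp Sc x (b :: y)) (Sc None (Some b) + Ldp Sc (a :: x) y)))
      as [E|E]; rewrite E in HL.
    + destruct s as [|s]; [apply cut_at_small; lia|].
      apply cut_at_match; [lra | apply IHx; lia].
    + destruct (Rmax_or (Sc (Some a) None + Ldp Sc x (b :: y)) (Sc None (Some b) + Ldp Sc (a :: x) y))
        as [E'|E']; rewrite E' in HL.
      * apply cut_at_gap_x; [lra | apply IHx; simpl; lia].
      * apply cut_at_gap_y; [lra | apply IHy; simpl; lia].
Qed.

Fixpoint cut_score (j : list (nat * nat)) (x y : list nat) : R :=
  match j with
  | [] => 0
  | (a, b) :: j' => Ldp Sc (firstn a x) (firstn b y) + cut_score j' (skipn a x) (skipn b y)
  end.

End ScoreStructure.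

Fixpoint sum_fst (j : list (nat * nat)) : nat :=
  match j with [] => 0%nat | q :: j' => (fst q + sum_fst j')%nat end.
Fixpoint sum_snd (j : list (nat * nat)) : nat :=
  match j with [] => 0%nat | q :: j' => (snd q + sum_snd j')%nat end.

Definition near_size (n : nat) (ab : nat * nat) : Prop :=
  (n <= fst ab + snd ab + 1 /\ fst ab + snd ab <= n + 1)%nat.

Lemma Ldp_multicut Sc n q : (1 <= n)%nat -> (1 <= q)%nat -> forall e x y, (e <= 1)%nat ->
  (length x + length y = q * n + e)%nat ->
  exists j, length j = q /\ Forall (near_size n) j /\
    sum_fst j = length x /\ sum_snd j = length y /\ Ldp Sc x y <= cut_score Sc j x y.
Proof.
  intros Hn; induction q as [|q IH]; intros Hq e x y He Hl; [lia|].
  destruct q as [|q].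
  - exists [(length x, length y)]; unfold near_size; repeat split; simpl; try lia.
    + repeat constructor; simpl; lia.
    + rewrite !firstn_all; lra.
  - destruct (Ldp_cut Sc x y (n + e) ltac:(lia)) as [x1 [x2 [y1 [y2 [-> [-> [Hs Hc]]]]]]].
    rewrite !length_app in Hl.
    destruct (IH ltac:(lia) (n + e - (length x1 + length y1))%nat x2 y2 ltac:(lia) ltac:(lia))
      as [j [J1 [J2 [J3 [J4 J5]]]]].
    exists ((length x1, length y1) :: j); unfold near_size; repeat split; simpl;
      rewrite ?length_app; try lia.
    + constructor; auto; simpl; lia.
    + rewrite !firstn_app, !firstn_all, !Nat.sub_diag, !firstn_O, !app_nil_r.
      rewrite !skipn_app, !skipn_all, !Nat.sub_diag, !skipn_O; simpl; lra.
Qed.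

Definition is_word (k : nat) (x : list nat) : Prop := Forall (fun a => (a < k)%nat) x.

Lemma is_word_app k x y : is_word k x -> is_word k y -> is_word k (x ++ y).
Proof. intros; apply Forall_app; auto. Qed.

Lemma is_word_firstn k n x : is_word k x -> is_word k (firstn n x).
Proof. intros H; rewrite <- (firstn_skipn n x) in H; apply Forall_app in H; tauto. Qed.

Lemma is_word_skipn k n x : is_word k x -> is_word k (skipn n x).
Proof. intros H; rewrite <- (firstn_skipn n x) in H; apply Forall_app in H; tauto. Qed.

Lemma inA_Astar k c : inA k c -> In c (Astar k).
Proof. destruct c as [a|]; simpl; intros H; [right; apply in_map, in_seq; lia | left; auto]. Qed.

Lemma Rabs_add_l (c A B : R) : Rabs ((c + A) - (c + B)) = Rabs (A - B).
Proof. f_equal; ring. Qed.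

Lemma Rabs_add_r (c A B : R) : Rabs ((A + c) - (B + c)) = Rabs (A - B).
Proof. f_equal; ring. Qed.

Lemma Rmax_close A B A' B' d :
  Rabs (A - A') <= d -> Rabs (B - B') <= d -> Rabs (Rmax A B - Rmax A' B') <= d.
Proof. intros H1 H2; unfold Rmax; destruct (Rle_dec A B), (Rle_dec A' B'); split_Rabs; lra. Qed.

Section ScoreBounds.
Variable k : nat.
Variable Sc : scoring.
Let Sinf := norm_inf k Sc.
Let Sdel := norm_delta k Sc.

Lemma norm_inf_nonneg : 0 <= Sinf.
Proof. apply maxl_nonneg. Qed.

Lemma norm_delta_nonneg : 0 <= Sdel.
Proof. apply maxl_nonneg. Qed.

Lemma score_bound c d : inA k c -> inA k d -> - Sinf <= Sc c d <= Sinf.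
Proof.
  intros Hc Hd.
  assert (H : Rabs (Sc c d) <= Sinf).
  { apply fold_Rmax_ge, in_flat_map; exists c; split; [apply inA_Astar; auto|].
    apply in_map_iff; exists d; split; [auto | apply inA_Astar; auto]. }
  revert H; split_Rabs; lra.
Qed.

Lemma score_diff_bound c d e : inA k c -> inA k d -> inA k e -> Rabs (Sc c d - Sc c e) <= Sdel.
Proof.
  intros Hc Hd He; apply fold_Rmax_ge, in_flat_map.
  exists c; split; [apply inA_Astar; auto|]; apply in_flat_map.
  exists d; split; [apply inA_Astar; auto|].
  apply in_map_iff; exists e; split; [auto | apply inA_Astar; auto].
Qed.

Lemma Ldp_drop_y x b y : is_word k x -> (b < k)%nat -> Ldp Sc x (b :: y) <= Ldp Sc x y + 2 * Sinf.
Proof.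
  intros Hx Hb; induction x as [|a x IH].
  - rewrite Ldp_nil_cons; pose proof (score_bound None (Some b) I Hb); lra.
  - inversion Hx as [|? ? Ha Hx']; subst; rewrite Ldp_cons_cons.
    pose proof (score_bound (Some a) (Some b) Ha Hb); pose proof (score_bound (Some a) None Ha I).
    pose proof (score_bound None (Some b) I Hb); pose proof (Ldp_gap_x Sc a x y).
    specialize (IH Hx'); repeat apply Rmax_lub; lra.
Qed.

Lemma Ldp_drop_x a x y : is_word k y -> (a < k)%nat -> Ldp Sc (a :: x) y <= Ldp Sc x y + 2 * Sinf.
Proof.
  intros Hy Ha; induction y as [|b y IH].
  - rewrite Ldp_cons_nil; pose proof (score_bound (Some a) None Ha I); lra.
  - inversion Hy as [|? ? Hb Hy']; subst; rewrite Ldp_cons_cons.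
    pose proof (score_bound (Some a) (Some b) Ha Hb); pose proof (score_bound (Some a) None Ha I).
    pose proof (score_bound None (Some b) I Hb); pose proof (Ldp_gap_y Sc b x y).
    specialize (IH Hy'); repeat apply Rmax_lub; lra.
Qed.

Lemma Ldp_drop_both a x b y : is_word k x -> is_word k y -> (a < k)%nat -> (b < k)%nat ->
  Ldp Sc (a :: x) (b :: y) <= Ldp Sc x y + 3 * Sinf.
Proof.
  intros Hx Hy Ha Hb; rewrite Ldp_cons_cons.
  pose proof (score_bound (Some a) (Some b) Ha Hb); pose proof (score_bound (Some a) None Ha I).
  pose proof (score_bound None (Some b) I Hb).
  pose proof (Ldp_drop_y x b y Hx Hb); pose proof (Ldp_drop_x a x y Hy Ha).
  repeat apply Rmax_lub; lra.
Qed.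

(** Every letter contributes at most [||S||_inf] in absolute value. *)
Lemma Ldp_lower x : forall y, is_word k x -> is_word k y ->
  - INR (length x + length y) * Sinf <= Ldp Sc x y.
Proof.
  induction x as [|a x IHx]; intros y; induction y as [|b y IHy]; intros Hx Hy.
  - rewrite Ldp_nil_nil; simpl; lra.
  - inversion Hy; subst; rewrite Ldp_nil_cons; pose proof (score_bound None (Some b) I ltac:(auto)).
    specialize (IHy Hx ltac:(auto)); simpl length in *; rewrite ?plus_INR, ?S_INR in *; simpl INR in *; nra.
  - inversion Hx; subst; pose proof (Ldp_gap_x Sc a x []); pose proof (score_bound (Some a) None ltac:(auto) I).
    specialize (IHx [] ltac:(auto) Hy); simpl length in *; rewrite ?plus_INR, ?S_INR in *; simpl INR in *; nra.
  - inversion Hx; subst; pose proof (Ldp_gap_x Sc a x (b :: y)).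
    pose proof (score_bound (Some a) None ltac:(auto) I).
    specialize (IHx (b :: y) ltac:(auto) Hy); simpl length in *; rewrite ?plus_INR, ?S_INR in *; nra.
Qed.

Lemma Ldp_upper x : forall y, is_word k x -> is_word k y ->
  Ldp Sc x y <= INR (length x + length y) * Sinf.
Proof.
  pose proof norm_inf_nonneg.
  induction x as [|a x IHx]; intros y; induction y as [|b y IHy]; intros Hx Hy.
  - rewrite Ldp_nil_nil; simpl; lra.
  - inversion Hy; subst; rewrite Ldp_nil_cons; pose proof (score_bound None (Some b) I ltac:(auto)).
    specialize (IHy Hx ltac:(auto)); simpl length in *; rewrite ?plus_INR, ?S_INR in *; simpl INR in *; nra.
  - inversion Hx; subst; rewrite Ldp_cons_nil; pose proof (score_bound (Some a) None ltac:(auto) I).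
    specialize (IHx [] ltac:(auto) Hy); simpl length in *; rewrite ?plus_INR, ?S_INR in *; simpl INR in *; nra.
  - inversion Hx; inversion Hy; subst; rewrite Ldp_cons_cons.
    pose proof (score_bound (Some a) (Some b) ltac:(auto) ltac:(auto)).
    pose proof (score_bound (Some a) None ltac:(auto) I); pose proof (score_bound None (Some b) I ltac:(auto)).
    pose proof (IHx y ltac:(auto) ltac:(auto)); pose proof (IHx (b :: y) ltac:(auto) Hy).
    specialize (IHy Hx ltac:(auto)); simpl length in *; rewrite ?plus_INR, ?S_INR in *.
    repeat apply Rmax_lub; nra.
Qed.

Hypothesis Hsym : is_scoring k Sc.

Lemma Ldp_sym x : forall y, is_word k x -> is_word k y -> Ldp Sc x y = Ldp Sc y x.
Proof.
  induction x as [|a x IHx]; intros y; induction y as [|b y IHy]; intros Hx Hy; [reflexivity| | |].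
  - inversion Hy; subst; rewrite Ldp_nil_cons, Ldp_cons_nil, IHy by auto.
    rewrite (Hsym None (Some b)) by (simpl; auto); reflexivity.
  - inversion Hx; subst; rewrite Ldp_nil_cons, Ldp_cons_nil, (IHx []) by auto.
    rewrite (Hsym None (Some a)) by (simpl; auto); reflexivity.
  - inversion Hx; inversion Hy; subst; rewrite !Ldp_cons_cons, (IHx y), (IHx (b :: y)), IHy by auto.
    rewrite (Hsym (Some a) (Some b)), (Hsym (Some a) None), (Hsym None (Some b)) by (simpl; auto).
    rewrite (Rmax_comm (Sc None (Some a) + _)); reflexivity.
Qed.

Lemma score_diff_bound_l c d e : inA k c -> inA k d -> inA k e -> Rabs (Sc d c - Sc e c) <= Sdel.
Proof. intros; rewrite (Hsym d c), (Hsym e c) by auto; apply score_diff_bound; auto. Qed.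

Lemma Ldp_change_x u : forall a b v y, is_word k u -> is_word k v -> is_word k y ->
  (a < k)%nat -> (b < k)%nat -> Rabs (Ldp Sc (u ++ a :: v) y - Ldp Sc (u ++ b :: v) y) <= Sdel.
Proof.
  induction u as [|c u IHu]; intros a b v y Hu Hv Hy Ha Hb; simpl app;
    induction y as [|d y IHy]; try (inversion Hy as [|? ? Hd Hy']; subst);
    rewrite ?Ldp_cons_nil, ?Ldp_cons_cons; [| apply Rmax_close; [|apply Rmax_close] | | apply Rmax_close; [|apply Rmax_close]].
  - rewrite Rabs_add_r; apply score_diff_bound_l; simpl; auto.
  - rewrite Rabs_add_r; apply score_diff_bound_l; simpl; auto.
  - rewrite Rabs_add_r; apply score_diff_bound_l; simpl; auto.
  - rewrite Rabs_add_l; auto.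
  - inversion Hu; subst; rewrite Rabs_add_l; apply IHu; auto.
  - inversion Hu; subst; rewrite Rabs_add_l; apply IHu; auto.
  - inversion Hu; subst; rewrite Rabs_add_l; apply IHu; auto.
  - rewrite Rabs_add_l; auto.
Qed.

End ScoreBounds.

(** * Expectations over i.i.d. random words

    [Ew n g] is the expectation of [g] at a random word of length [n] whose
    letters are i.i.d. with law [p]; [E2 a b g] is the expectation of [g] at
    two independent random words of lengths [a] and [b]. *)

Lemma words_spec k n x : In x (words k n) -> length x = n /\ is_word k x.
Proof.
  revert x; induction n as [|n IH]; simpl; intros x H.
  - destruct H as [<-|[]]; split; [reflexivity | constructor].
  - apply in_flat_map in H; destruct H as [a [Ha H]]; apply in_map_iff in H.
    destruct H as [x' [<- Hx']]; destruct (IH _ Hx'); apply in_seq in Ha.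
    split; simpl; [lia | constructor; auto; lia].
Qed.

Section Expectation.
Variable k : nat.
Variable p : nat -> R.
Hypothesis Hp : is_distribution k p.

Definition Ew (n : nat) (g : list nat -> R) : R :=
  sumR (map (fun x => word_prob p x * g x) (words k n)).

Lemma word_prob_nonneg x : is_word k x -> 0 <= word_prob p x.
Proof.
  induction x as [|a x IH]; intros H; [unfold word_prob; simpl; lra|].
  inversion H; subst; change (word_prob p (a :: x)) with (p a * word_prob p x).
  apply Rmult_le_pos; [apply (proj1 Hp) | apply IH]; auto.
Qed.

Lemma Ew_ext n g h : (forall x, length x = n -> is_word k x -> g x = h x) -> Ew n g = Ew n h.
Proof. intros H; apply sumR_ext; intros x Hx; destruct (words_spec _ _ _ Hx); rewrite H; auto. Qed.

Lemma Ew_O g : Ew 0 g = g [].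
Proof. unfold Ew, word_prob; simpl; ring. Qed.

Lemma Ew_S n g : Ew (S n) g = sumR (map (fun c => p c * Ew n (fun x => g (c :: x))) (seq 0 k)).
Proof.
  unfold Ew; simpl words; rewrite sumR_flat_map; apply sumR_ext; intros c _.
  rewrite map_map, <- sumR_scal; apply sumR_ext; intros x _; unfold word_prob; simpl; ring.
Qed.

Lemma Ew_plus n f g : Ew n (fun x => f x + g x) = Ew n f + Ew n g.
Proof. unfold Ew; rewrite <- sumR_plus; apply sumR_ext; intros; ring. Qed.

Lemma Ew_scal n c f : Ew n (fun x => c * f x) = c * Ew n f.
Proof. unfold Ew; rewrite <- sumR_scal; apply sumR_ext; intros; ring. Qed.

Lemma Ew_minus n f g : Ew n (fun x => f x - g x) = Ew n f - Ew n g.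
Proof.
  rewrite (Ew_ext n _ (fun x => f x + (-1) * g x)) by (intros; ring).
  rewrite Ew_plus, Ew_scal; ring.
Qed.

Lemma Ew_le n f g : (forall x, length x = n -> is_word k x -> f x <= g x) -> Ew n f <= Ew n g.
Proof.
  intros H; apply sumR_le; intros x Hx; destruct (words_spec _ _ _ Hx) as [Hl Hw].
  apply Rmult_le_compat_l; [apply word_prob_nonneg | apply H]; auto.
Qed.

Lemma Ew_const n c : Ew n (fun _ => c) = c.
Proof.
  induction n as [|n IH]; [apply Ew_O|].
  rewrite Ew_S, IH, (sumR_ext _ (fun x => c * p x)) by (intros; ring).
  rewrite sumR_scal, (proj2 Hp); ring.
Qed.

Lemma Ew_app a b g : Ew (a + b) g = Ew a (fun x1 => Ew b (fun x2 => g (x1 ++ x2))).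
Proof.
  revert g; induction a as [|a IH]; intros g; [rewrite Ew_O; reflexivity|].
  simpl plus; rewrite !Ew_S; apply sumR_ext; intros c _; rewrite IH; reflexivity.
Qed.

Lemma Ew_swap a b (g : list nat -> list nat -> R) :
  Ew a (fun x => Ew b (fun y => g x y)) = Ew b (fun y => Ew a (fun x => g x y)).
Proof.
  unfold Ew.
  rewrite (sumR_ext _ (fun x => sumR (map (fun y => word_prob p x * (word_prob p y * g x y)) (words k b))))
    by (intros; rewrite sumR_scal; reflexivity).
  rewrite sumR_swap; apply sumR_ext; intros y _; rewrite <- sumR_scal; apply sumR_ext; intros; ring.
Qed.

Lemma Ew_firstn a b (F : list nat -> R) : Ew (a + b) (fun x => F (firstn a x)) = Ew a F.
Proof.
  rewrite Ew_app; apply Ew_ext; intros x1 Hl _.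
  rewrite (Ew_ext b _ (fun _ => F x1)); [apply Ew_const|].
  intros; rewrite firstn_app, Hl, Nat.sub_diag, firstn_O, app_nil_r, <- Hl, firstn_all; auto.
Qed.

Lemma Ew_skipn a b (F : list nat -> R) : Ew (a + b) (fun x => F (skipn a x)) = Ew b F.
Proof.
  rewrite Ew_app, (Ew_ext a _ (fun _ => Ew b F)); [apply Ew_const|].
  intros x1 Hl _; apply Ew_ext; intros x2 _ _.
  rewrite skipn_app, Hl, Nat.sub_diag, skipn_O, <- Hl, skipn_all; reflexivity.
Qed.

Definition E2 (a b : nat) (g : list nat -> list nat -> R) : R := Ew a (fun x => Ew b (fun y => g x y)).

Lemma E2_ext a b f g :
  (forall x y, length x = a -> length y = b -> is_word k x -> is_word k y -> f x y = g x y) ->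
  E2 a b f = E2 a b g.
Proof. intros H; apply Ew_ext; intros; apply Ew_ext; intros; auto. Qed.

Lemma E2_le a b f g :
  (forall x y, length x = a -> length y = b -> is_word k x -> is_word k y -> f x y <= g x y) ->
  E2 a b f <= E2 a b g.
Proof. intros H; apply Ew_le; intros; apply Ew_le; intros; auto. Qed.

Lemma E2_plus a b f g : E2 a b (fun x y => f x y + g x y) = E2 a b f + E2 a b g.
Proof. unfold E2; rewrite <- Ew_plus; apply Ew_ext; intros; apply Ew_plus. Qed.

Lemma E2_scal a b c g : E2 a b (fun x y => c * g x y) = c * E2 a b g.
Proof. unfold E2; rewrite <- Ew_scal; apply Ew_ext; intros; apply Ew_scal. Qed.

Lemma E2_const a b c : E2 a b (fun _ _ => c) = c.
Proof. unfold E2; rewrite (Ew_ext _ _ (fun _ => c)); [apply Ew_const | intros; apply Ew_const]. Qed.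

Lemma E2_swap a b g : E2 a b g = E2 b a (fun y x => g x y).
Proof. apply Ew_swap. Qed.

Lemma E2_sum {A} a b (J : list A) (G : A -> list nat -> list nat -> R) :
  E2 a b (fun x y => sumR (map (fun j => G j x y) J)) = sumR (map (fun j => E2 a b (G j)) J).
Proof.
  induction J as [|j J IH]; [simpl; apply E2_const|].
  simpl map; rewrite sumR_cons, <- IH, <- E2_plus; reflexivity.
Qed.

Lemma E2_split a A b B F G :
  E2 (a + A) (b + B) (fun x y => F (firstn a x) (firstn b y) + G (skipn a x) (skipn b y))
  = E2 a b F + E2 A B G.
Proof.
  rewrite E2_plus; f_equal; unfold E2.
  - rewrite (Ew_ext (a + A) _ (fun x => Ew b (fun y => F (firstn a x) y)));
      [apply (Ew_firstn a A (fun x1 => Ew b (F x1))) | intros x _ _; apply (Ew_firstn b B)].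
  - rewrite (Ew_ext (a + A) _ (fun x => Ew B (fun y => G (skipn a x) y)));
      [apply (Ew_skipn a A (fun x1 => Ew B (G x1))) | intros x _ _; apply (Ew_skipn b B)].
Qed.

Lemma E2_as_Ew N g : E2 N N g = Ew (N + N) (fun z => g (firstn N z) (skipn N z)).
Proof.
  rewrite Ew_app; apply Ew_ext; intros x1 Hl _; apply Ew_ext; intros x2 _ _.
  rewrite firstn_app, skipn_app, Hl, Nat.sub_diag, firstn_O, skipn_O, app_nil_r, <- Hl, firstn_all, skipn_all.
  reflexivity.
Qed.

Lemma ELn_E2 Sc n : ELn k p Sc n = E2 n n (Ldp Sc).
Proof.
  unfold ELn, E2, Ew; rewrite <- (map_id (flat_map _ _)), sumR_flat_map.
  apply sumR_ext; intros x _; rewrite map_id, <- sumR_scal.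
  apply sumR_ext; intros y _; rewrite LS_Ldp; ring.
Qed.

End Expectation.

(** * Hoeffding's lemma and the bounded-differences inequality *)

Lemma exp_le x y : x <= y -> exp x <= exp y.
Proof. intros [H | ->]; [left; apply exp_increasing; auto | lra]. Qed.

Lemma ln_le x y : 0 < x -> x <= y -> ln x <= ln y.
Proof. intros H0 [H | ->]; [left; apply ln_increasing; auto | lra]. Qed.

(** The analytic core of Hoeffding's lemma: with [den u = 1 - q + q e^u], the
    function [psi u = u^2/8 + q u - ln (den u)] vanishes with its derivative
    at [0] and is convex, hence non-negative on [[0, +oo)]. *)
Section HoeffdingCore.
Import Coquelicot.Coquelicot.
Variable q : R.
Hypothesis Hq : 0 <= q <= 1.

Definition hoeff_den (u : R) : R := 1 - q + q * exp u.
Definition hoeff_psi (u : R) : R := u ^ 2 / 8 + q * u - ln (hoeff_den u).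
Definition hoeff_dpsi (u : R) : R := u / 4 + q - q * exp u / hoeff_den u.
Definition hoeff_ddpsi (u : R) : R := / 4 - q * exp u * (1 - q) / (hoeff_den u) ^ 2.

Lemma hoeff_den_pos u : 0 < hoeff_den u.
Proof.
  unfold hoeff_den; pose proof (exp_pos u).
  destruct (Req_dec q 0) as [-> | Hq0]; [lra|].
  assert (0 < q * exp u) by (apply Rmult_lt_0_compat; lra); lra.
Qed.

Lemma hoeff_psi_derive u : is_derive hoeff_psi u (hoeff_dpsi u).
Proof.
  pose proof (hoeff_den_pos u); unfold hoeff_psi, hoeff_dpsi, hoeff_den in *.
  auto_derive; [lra | field; lra].
Qed.

Lemma hoeff_dpsi_derive u : is_derive hoeff_dpsi u (hoeff_ddpsi u).
Proof.
  pose proof (hoeff_den_pos u); unfold hoeff_dpsi, hoeff_ddpsi, hoeff_den in *.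
  auto_derive; [lra | field; lra].
Qed.

(** [ddpsi >= 0] is the AM-GM inequality [4 a b <= (a + b)^2]. *)
Lemma hoeff_ddpsi_nonneg u : 0 <= hoeff_ddpsi u.
Proof.
  pose proof (hoeff_den_pos u); pose proof (exp_pos u); unfold hoeff_ddpsi, hoeff_den in *.
  set (w := 1 - q + q * exp u) in *.
  assert (Hamgm : q * exp u * (1 - q) <= w ^ 2 / 4).
  { pose proof (pow2_ge_0 (q * exp u - (1 - q))); unfold w; nra. }
  assert (q * exp u * (1 - q) / w ^ 2 <= / 4); [|lra].
  apply Rmult_le_reg_r with (w ^ 2); [apply pow_lt; lra|].
  unfold Rdiv; rewrite Rmult_assoc, Rinv_l by (apply pow_nonzero; lra); lra.
Qed.

Lemma nondecreasing_from_0 (F dF : R -> R) u :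
  (forall t, is_derive F t (dF t)) -> (forall t, 0 <= t <= u -> 0 <= dF t) -> 0 <= u ->
  F 0 <= F u.
Proof.
  intros HF HdF Hu; destruct (Req_dec u 0) as [-> | Hu0]; [lra|].
  destruct (MVT_gen F 0 u dF) as [c [Hc Hm]].
  - intros; apply HF.
  - intros; apply continuity_pt_filterlim, (@ex_derive_continuous R_AbsRing R_NormedModule).
    eexists; apply HF.
  - rewrite Rmin_left, Rmax_right in Hc by lra; pose proof (HdF c ltac:(lra)); nra.
Qed.

Lemma hoeff_psi_nonneg u : 0 <= u -> 0 <= hoeff_psi u.
Proof.
  intros Hu.
  assert (E0 : hoeff_psi 0 = 0).
  { unfold hoeff_psi, hoeff_den; rewrite exp_0; replace (1 - q + q * 1) with 1 by ring.
    rewrite ln_1; lra. }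
  rewrite <- E0; apply (nondecreasing_from_0 _ hoeff_dpsi); auto.
  - exact hoeff_psi_derive.
  - intros t Ht.
    assert (E1 : hoeff_dpsi 0 = 0) by (unfold hoeff_dpsi, hoeff_den; rewrite exp_0; field; lra).
    rewrite <- E1; apply (nondecreasing_from_0 _ hoeff_ddpsi); try lra.
    + exact hoeff_dpsi_derive.
    + intros; apply hoeff_ddpsi_nonneg.
Qed.

End HoeffdingCore.

(** Exponentiating [psi >= 0]: the moment generating function of a centred
    Bernoulli([q]) variable scaled by [u] is at most [exp (u^2/8)]. *)
Lemma hoeffding_exp_bound q u : 0 <= q <= 1 -> 0 <= u ->
  exp (- q * u) * (1 - q + q * exp u) <= exp (u ^ 2 / 8).
Proof.
  intros Hq Hu; pose proof (hoeff_psi_nonneg q Hq u Hu); pose proof (hoeff_den_pos q Hq u).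
  unfold hoeff_psi, hoeff_den in *.
  rewrite <- (exp_ln (1 - q + q * exp u)), <- exp_plus by lra; apply exp_le; lra.
Qed.

(** Convexity of [exp]: on [[0, 1]] it lies below its chord. *)
Lemma exp_chord u v : 0 <= v <= 1 -> exp (u * v) <= 1 - v + v * exp u.
Proof.
  intros Hv; set (E := exp (u * v)).
  assert (E0 : 1 = E * exp (- (u * v))) by (unfold E; rewrite <- exp_plus, Rplus_opp_r, exp_0; auto).
  assert (E1 : exp u = E * exp (u * (1 - v))) by (unfold E; rewrite <- exp_plus; f_equal; ring).
  assert (HE : 0 <= E) by (left; apply exp_pos).
  assert (H0 : (1 - v) * (E * (1 - u * v)) <= (1 - v) * (E * exp (- (u * v)))).
  { apply Rmult_le_compat_l, Rmult_le_compat_l; try lra; pose proof (exp_ineq1_le (- (u * v))); lra. }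
  assert (H1 : v * (E * (1 + u * (1 - v))) <= v * (E * exp (u * (1 - v)))).
  { apply Rmult_le_compat_l, Rmult_le_compat_l; try lra; apply exp_ineq1_le. }
  replace (1 - v + v * exp u) with ((1 - v) * 1 + v * exp u) by ring.
  rewrite E0 at 1; rewrite E1; nra.
Qed.

Section Hoeffding.
Variable k : nat.
Variable p : nat -> R.
Hypothesis Hp : is_distribution k p.

Definition mean (g : nat -> R) : R := sumR (map (fun c => p c * g c) (seq 0 k)).

Lemma alphabet_nonempty : (1 <= k)%nat.
Proof. destruct Hp as [_ H]; destruct k; simpl in H; [lra | lia]. Qed.

Lemma mean_affine a b g : mean (fun c => a + b * g c) = a + b * mean g.
Proof.
  unfold mean; rewrite (sumR_ext _ (fun c => a * p c + b * (p c * g c))) by (intros; ring).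
  rewrite sumR_plus, !sumR_scal, (proj2 Hp); ring.
Qed.

Lemma mean_le g g' : (forall c, (c < k)%nat -> g c <= g' c) -> mean g <= mean g'.
Proof.
  intros H; apply sumR_le; intros c Hc; apply in_seq in Hc.
  apply Rmult_le_compat_l; [apply (proj1 Hp) | apply H]; lia.
Qed.

Lemma mean_const a : mean (fun _ => a) = a.
Proof.
  unfold mean; rewrite (sumR_ext _ (fun c => a * p c)) by (intros; ring).
  rewrite sumR_scal, (proj2 Hp); ring.
Qed.

Lemma mean_in_range g lo hi : (forall c, (c < k)%nat -> lo <= g c <= hi) -> lo <= mean g <= hi.
Proof.
  intros H; rewrite <- (mean_const lo), <- (mean_const hi) at 1.
  split; apply mean_le; intros c Hc; apply H; auto.
Qed.

Lemma mean_ext g g' : (forall c, (c < k)%nat -> g c = g' c) -> mean g = mean g'.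
Proof. intros H; apply sumR_ext; intros c Hc; apply in_seq in Hc; rewrite H by lia; reflexivity. Qed.

Lemma hoeffding_unit h u : (forall c, (c < k)%nat -> 0 <= h c <= 1) -> 0 <= u ->
  mean (fun c => exp (u * (h c - mean h))) <= exp (u ^ 2 / 8).
Proof.
  intros Hh Hu; set (mu := mean h).
  assert (Hmu : 0 <= mu <= 1) by (apply mean_in_range; auto).
  assert (Hfactor : mean (fun c => exp (u * (h c - mu))) = exp (- mu * u) * mean (fun c => exp (u * h c))).
  { rewrite <- (Rplus_0_l (_ * mean _)), <- mean_affine.
    apply mean_ext; intros c _; rewrite Rplus_0_l, <- exp_plus; f_equal; ring. }
  assert (Hchord : mean (fun c => exp (u * h c)) <= 1 - mu + mu * exp u).
  { replace (1 - mu + mu * exp u) with (1 + (exp u - 1) * mu) by ring.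
    unfold mu; rewrite <- mean_affine; apply mean_le; intros c Hc.
    pose proof (exp_chord u (h c) (Hh c Hc)); lra. }
  rewrite Hfactor; eapply Rle_trans; [|apply (hoeffding_exp_bound mu u Hmu Hu)].
  apply Rmult_le_compat_l; [left; apply exp_pos | exact Hchord].
Qed.

Lemma range_of_diffs g Dd : (forall c d, (c < k)%nat -> (d < k)%nat -> g c - g d <= Dd) ->
  exists lo, forall c, (c < k)%nat -> lo <= g c <= lo + Dd.
Proof.
  intros HD; pose proof alphabet_nonempty as Hk.
  exists (fold_right Rmin (g 0%nat) (map g (seq 0 k))); intros c Hc; split.
  - apply fold_Rmin_le, in_map, in_seq; lia.
  - destruct (fold_Rmin_in (g 0%nat) (map g (seq 0 k))) as [-> | Hin].
    + specialize (HD c 0%nat Hc Hk); lra.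
    + apply in_map_iff in Hin; destruct Hin as [c0 [<- Hc0]]; apply in_seq in Hc0.
      specialize (HD c c0 Hc ltac:(lia)); lra.
Qed.

Lemma hoeffding_lemma g Dd th : (forall c d, (c < k)%nat -> (d < k)%nat -> g c - g d <= Dd) ->
  0 <= th -> mean (fun c => exp (th * (g c - mean g))) <= exp (th ^ 2 * Dd ^ 2 / 8).
Proof.
  intros HD Hth; destruct (range_of_diffs g Dd HD) as [lo Hlo].
  assert (HDd : 0 <= Dd) by (pose proof alphabet_nonempty; specialize (HD 0%nat 0%nat ltac:(lia) ltac:(lia)); lra).
  destruct (Req_dec Dd 0) as [-> | HD0].
  - assert (Hconst : forall c, (c < k)%nat -> g c = lo) by (intros c Hc; specialize (Hlo c Hc); lra).
    rewrite (mean_ext g (fun _ => lo)), mean_const by auto.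
    rewrite (mean_ext _ (fun _ => 1)), mean_const.
    + replace (th ^ 2 * 0 ^ 2 / 8) with 0 by (simpl; field); rewrite exp_0; lra.
    + intros c Hc; rewrite Hconst, Rminus_diag, Rmult_0_r, exp_0 by auto; reflexivity.
  - set (h := fun c => (g c - lo) / Dd).
    assert (Hmean : mean h = (mean g - lo) / Dd).
    { unfold h; rewrite (mean_ext _ (fun c => - lo / Dd + / Dd * g c)) by (intros; field; lra).
      rewrite mean_affine; field; lra. }
    replace (th ^ 2 * Dd ^ 2 / 8) with ((th * Dd) ^ 2 / 8) by (unfold Rdiv; ring).
    eapply Rle_trans; [|apply (hoeffding_unit h (th * Dd))].
    + right; apply mean_ext; intros c _; f_equal; rewrite Hmean; unfold h; field; lra.
    + intros c Hc; specialize (Hlo c Hc); unfold h; split.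
      * apply Rmult_le_pos; [lra | left; apply Rinv_0_lt_compat; lra].
      * apply Rmult_le_reg_r with Dd; [lra|]; unfold Rdiv; rewrite Rmult_assoc, Rinv_l; lra.
    + apply Rmult_le_pos; lra.
Qed.

End Hoeffding.

(** The bounded-differences (McDiarmid) exponential-moment bound, proved by
    conditioning on the first letter and applying Hoeffding's lemma. *)
Section BoundedDifferences.
Variable k : nat.
Variable p : nat -> R.
Hypothesis Hp : is_distribution k p.
Variable Dd : R.

Definition bounded_diff (M : nat) (h : list nat -> R) : Prop :=
  forall u v c d, is_word k u -> is_word k v -> (c < k)%nat -> (d < k)%nat ->
    (length u + S (length v) = M)%nat -> Rabs (h (u ++ c :: v) - h (u ++ d :: v)) <= Dd.

Lemma bounded_diff_tail M h c :
  bounded_diff (S M) h -> (c < k)%nat -> bounded_diff M (fun z => h (c :: z)).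
Proof.
  intros HB Hc u v c1 d1 Hu Hv Hc1 Hd1 Hl.
  apply (HB (c :: u) v c1 d1); auto; [constructor; auto | simpl; lia].
Qed.

Lemma bounded_diff_first M h c d : bounded_diff (S M) h -> (c < k)%nat -> (d < k)%nat ->
  Ew k p M (fun z => h (c :: z)) - Ew k p M (fun z => h (d :: z)) <= Dd.
Proof.
  intros HB Hc Hd; rewrite <- Ew_minus, <- (Ew_const k p Hp M Dd).
  apply Ew_le; auto; intros z Hz Hw.
  specialize (HB [] z c d (Forall_nil _) Hw Hc Hd ltac:(simpl; lia)); simpl in HB.
  revert HB; split_Rabs; lra.
Qed.

Lemma mean_scal a g : mean k p (fun c => a * g c) = a * mean k p g.
Proof.
  rewrite <- (Rplus_0_l (a * _)), <- (mean_affine k p Hp).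
  apply mean_ext; intros; ring.
Qed.

Lemma mgf_bounded_diff M : forall h, bounded_diff M h -> forall th, 0 <= th ->
  Ew k p M (fun z => exp (th * (h z - Ew k p M h))) <= exp (th ^ 2 * INR M * Dd ^ 2 / 8).
Proof.
  induction M as [|M IH]; intros h HB th Hth.
  { rewrite !Ew_O, Rminus_diag, Rmult_0_r; apply exp_le; simpl; nra. }
  set (g := fun c => Ew k p M (fun z => h (c :: z))).
  set (E := exp (th ^ 2 * INR M * Dd ^ 2 / 8)).
  assert (Hfirst : forall F, Ew k p (S M) F = mean k p (fun c => Ew k p M (fun z => F (c :: z))))
    by (intros; apply Ew_S).
  rewrite (Hfirst h), Hfirst; fold g; set (mu := mean k p g).
  assert (Hcond : forall c, (c < k)%nat ->
    Ew k p M (fun z => exp (th * (h (c :: z) - mu))) <= exp (th * (g c - mu)) * E).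
  { intros c Hc.
    rewrite (Ew_ext k p M _ (fun z => exp (th * (g c - mu)) * exp (th * (h (c :: z) - g c))))
      by (intros; rewrite <- exp_plus; f_equal; ring).
    rewrite Ew_scal; apply Rmult_le_compat_l; [left; apply exp_pos|].
    apply IH; [apply bounded_diff_tail|]; auto. }
  eapply Rle_trans; [apply (mean_le k p Hp _ _ Hcond)|].
  rewrite (mean_ext k p _ (fun c => E * exp (th * (g c - mu)))) by (intros; ring).
  rewrite mean_scal.
  eapply Rle_trans.
  { apply Rmult_le_compat_l; [left; apply exp_pos|].
    apply (hoeffding_lemma k p Hp g Dd th); auto.
    intros c d Hc Hd; apply (bounded_diff_first M h); auto. }
  unfold E; rewrite <- exp_plus, S_INR; apply exp_le; right; field.
Qed.

End BoundedDifferences.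

(** * The expected score [e a b = E L_S(X_1..X_a, Y_1..Y_b)] *)

Lemma split_around_letter {T} (u v : list T) (a : nat) :
  ((length u < a)%nat /\ forall c : T,
     firstn a (u ++ c :: v) = u ++ c :: firstn (a - length u - 1) v /\
     skipn a (u ++ c :: v) = skipn (a - length u - 1) v) \/
  ((a <= length u)%nat /\ forall c : T,
     firstn a (u ++ c :: v) = firstn a u /\ skipn a (u ++ c :: v) = skipn a u ++ c :: v).
Proof.
  destruct (Nat.lt_ge_cases (length u) a) as [Hlt|Hge]; [left | right]; split; auto; intros c;
    rewrite firstn_app, skipn_app.
  - replace (a - length u)%nat with (S (a - length u - 1)) by lia; simpl.
    rewrite firstn_all2, skipn_all2, ?Nat.sub_0_r by lia; auto.
  - replace (a - length u)%nat with 0%nat by lia; simpl; rewrite app_nil_r; auto.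
Qed.

Section ExpectedScore.
Variable k : nat.
Variable p : nat -> R.
Hypothesis Hp : is_distribution k p.
Variable Sc : scoring.
Hypothesis Hsym : is_scoring k Sc.
Let Sinf := norm_inf k Sc.
Let Sdel := norm_delta k Sc.

Definition Escore (a b : nat) : R := E2 k p a b (Ldp Sc).

Lemma E2_cut_score j :
  E2 k p (sum_fst j) (sum_snd j) (cut_score Sc j) = sumR (map (fun ab => Escore (fst ab) (snd ab)) j).
Proof.
  induction j as [|[a b] j IH].
  { transitivity (E2 k p 0 0 (fun _ _ => 0)); [apply E2_ext; reflexivity | apply E2_const; auto]. }
  simpl sum_fst; simpl sum_snd; simpl cut_score; rewrite (E2_split k p Hp), IH; reflexivity.
Qed.

Lemma Escore_sym a b : Escore a b = Escore b a.
Proof. unfold Escore; rewrite E2_swap; apply E2_ext; intros; apply (Ldp_sym k); auto. Qed.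

Lemma Escore_superadd a1 a2 b1 b2 : Escore a1 b1 + Escore a2 b2 <= Escore (a1 + a2) (b1 + b2).
Proof.
  unfold Escore; rewrite <- (E2_split k p Hp); apply (E2_le k p Hp); intros x y _ _ _ _.
  rewrite <- (firstn_skipn a1 x) at 3; rewrite <- (firstn_skipn b1 y) at 3.
  apply Ldp_superadd.
Qed.

Lemma E2_drop_first a b (c : R) F :
  E2 k p (1 + a) (1 + b) (fun x y => c + F (skipn 1 x) (skipn 1 y)) = c + E2 k p a b F.
Proof. rewrite (E2_split k p Hp 1 a 1 b (fun _ _ => c) F), E2_const; auto. Qed.

Lemma E2_drop_first_y a b (c : R) F :
  E2 k p a (1 + b) (fun x y => c + F x (skipn 1 y)) = c + E2 k p a b F.
Proof.
  pose proof (E2_split k p Hp 0 a 1 b (fun _ _ => c) F) as H; simpl plus in H.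
  rewrite E2_const in H by auto; rewrite <- H; apply E2_ext; reflexivity.
Qed.

Lemma Escore_S_lower a b : Escore a b - Sinf <= Escore (S a) (S b).
Proof.
  unfold Escore; change (S a) with (1 + a)%nat; change (S b) with (1 + b)%nat.
  apply Rle_trans with (E2 k p (1 + a) (1 + b) (fun x y => - Sinf + Ldp Sc (skipn 1 x) (skipn 1 y))).
  - rewrite E2_drop_first; lra.
  - apply (E2_le k p Hp); intros [|c x] [|d y] Hx Hy Ox Oy; try discriminate.
    inversion Ox as [|? ? Hc Ox']; inversion Oy as [|? ? Hd Oy']; subst; simpl skipn.
    pose proof (Ldp_match Sc c d x y); pose proof (score_bound k Sc (Some c) (Some d) Hc Hd).
    unfold Sinf; lra.
Qed.

Lemma Escore_S_upper a b : Escore (S a) (S b) <= Escore a b + 3 * Sinf.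
Proof.
  unfold Escore; change (S a) with (1 + a)%nat; change (S b) with (1 + b)%nat.
  apply Rle_trans with (E2 k p (1 + a) (1 + b) (fun x y => 3 * Sinf + Ldp Sc (skipn 1 x) (skipn 1 y))).
  - apply (E2_le k p Hp); intros [|c x] [|d y] Hx Hy Ox Oy; try discriminate.
    inversion Ox as [|? ? Hc Ox']; inversion Oy as [|? ? Hd Oy']; subst; simpl skipn.
    pose proof (Ldp_drop_both k Sc c x d y Ox' Oy' Hc Hd); unfold Sinf; lra.
  - rewrite E2_drop_first; lra.
Qed.

Lemma Escore_0S b : Escore 0 (S b) <= Escore 0 b + Sinf.
Proof.
  unfold Escore; change (S b) with (1 + b)%nat.
  apply Rle_trans with (E2 k p 0 (1 + b) (fun x y => Sinf + Ldp Sc x (skipn 1 y))).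
  - apply (E2_le k p Hp); intros [|c x] [|d y] Hx Hy Ox Oy; try discriminate.
    inversion Oy; subst; simpl skipn; rewrite Ldp_nil_cons.
    pose proof (score_bound k Sc None (Some d) I ltac:(auto)); unfold Sinf; lra.
  - rewrite E2_drop_first_y; lra.
Qed.

(** Near-diagonal values of [e] are controlled by [e n n]: by symmetry and
    superadditivity, [e a b + e b a <= e (a+b) (a+b)], up to one extra letter. *)
Lemma Escore_diag a b n : (a + b = n)%nat -> Escore a b <= Escore n n / 2.
Proof.
  intros E; pose proof (Escore_superadd a b b a) as H; rewrite (Escore_sym b a) in H.
  replace (a + b)%nat with n in H by lia; replace (b + a)%nat with n in H by lia; lra.
Qed.

Lemma Escore_below_diag a b n : (a + b + 1 = n)%nat -> Escore a b <= Escore n n / 2 + Sinf / 2.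
Proof.
  intros E; pose proof (Escore_superadd a (S b) b (S a)) as H; rewrite (Escore_sym (S b) (S a)) in H.
  replace (a + S b)%nat with n in H by lia; replace (b + S a)%nat with n in H by lia.
  pose proof (Escore_S_lower a b); lra.
Qed.

Lemma Escore_above_diag a b n : (a + b = n + 1)%nat -> Escore a b <= Escore n n / 2 + 3 * Sinf / 2.
Proof.
  intros E; pose proof (norm_inf_nonneg k Sc) as HI; fold Sinf in HI.
  destruct a as [|a]; [|destruct b as [|b]].
  - simpl in E; subst b; rewrite Nat.add_1_r.
    pose proof (Escore_0S n); pose proof (Escore_diag 0 n n eq_refl); lra.
  - rewrite Escore_sym; replace (S a) with (S n) by lia.
    pose proof (Escore_0S n); pose proof (Escore_diag 0 n n eq_refl); lra.
  - pose proof (Escore_superadd (S a) b (S b) a) as H; rewrite (Escore_sym b a) in H.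
    replace (S a + b)%nat with n in H by lia; replace (S b + a)%nat with n in H by lia.
    pose proof (Escore_S_upper a b); lra.
Qed.

Lemma Escore_near_size a b n : near_size n (a, b) ->
  Escore a b <= Escore n n / 2 + (Sinf + Sinf / 2 * (INR (a + b) - INR n)).
Proof.
  unfold near_size; simpl; intros [H1 H2]; pose proof (norm_inf_nonneg k Sc) as HI; fold Sinf in HI.
  destruct (Nat.eq_dec (a + b) n) as [E|E]; [|destruct (Nat.eq_dec (a + b + 1) n) as [E'|E']].
  - rewrite E; pose proof (Escore_diag a b n E); nra.
  - pose proof (Escore_below_diag a b n E').
    assert (INR n = INR (a + b) + 1) as -> by (rewrite <- E', plus_INR; simpl; ring); nra.
  - assert (E3 : (a + b = n + 1)%nat) by lia; pose proof (Escore_above_diag a b n E3).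
    rewrite E3, plus_INR; simpl INR; nra.
Qed.

Lemma sumR_affine (al be : R) j :
  sumR (map (fun ab => al + be * INR (fst ab + snd ab)) j) = INR (length j) * al + be * INR (sum_fst j + sum_snd j).
Proof.
  induction j as [|[a b] j IH]; [simpl; ring|].
  rewrite map_cons, sumR_cons, IH; simpl length; simpl sum_fst; simpl sum_snd.
  rewrite S_INR, !plus_INR; simpl; ring.
Qed.

Lemma Escore_blocks m n j : length j = (2 * m)%nat -> Forall (near_size n) j ->
  (sum_fst j + sum_snd j = 2 * (m * n))%nat ->
  sumR (map (fun ab => Escore (fst ab) (snd ab)) j) <= INR m * Escore n n + 2 * INR m * Sinf.
Proof.
  intros Hl HF Hs.
  apply Rle_trans with (sumR (map (fun ab => (Escore n n / 2 + Sinf - Sinf / 2 * INR n)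
                                             + Sinf / 2 * INR (fst ab + snd ab)) j)).
  - apply sumR_le; intros [a b] Hin; rewrite Forall_forall in HF.
    pose proof (Escore_near_size a b n (HF _ Hin)); simpl; lra.
  - rewrite sumR_affine, Hl, Hs, !mult_INR; simpl INR; right; field.
Qed.

Lemma cut_score_change_x j : forall u c d v y, is_word k u -> is_word k v -> is_word k y ->
  (c < k)%nat -> (d < k)%nat -> Rabs (cut_score Sc j (u ++ c :: v) y - cut_score Sc j (u ++ d :: v) y) <= Sdel.
Proof.
  pose proof (norm_delta_nonneg k Sc) as HD.
  induction j as [|[a b] j IH]; intros u c d v y Hu Hv Hy Hc Hd; simpl cut_score.
  - rewrite Rminus_0_r, Rabs_R0; auto.
  - destruct (split_around_letter u v a) as [[_ Hs]|[_ Hs]];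
      destruct (Hs c) as [-> ->]; destruct (Hs d) as [-> ->].
    + rewrite Rabs_add_r; apply Ldp_change_x; auto; apply is_word_firstn; auto.
    + rewrite Rabs_add_l; apply IH; auto; apply is_word_skipn; auto.
Qed.

Lemma cut_score_swap j : forall x y, is_word k x -> is_word k y ->
  cut_score Sc j x y = cut_score Sc (map (fun ab => (snd ab, fst ab)) j) y x.
Proof.
  induction j as [|[a b] j IH]; intros x y Hx Hy; simpl; auto.
  rewrite (Ldp_sym k Sc Hsym (firstn a x)), IH; auto;
    try apply is_word_firstn; try apply is_word_skipn; auto.
Qed.

Lemma cut_score_change_y j u c d v x : is_word k u -> is_word k v -> is_word k x ->
  (c < k)%nat -> (d < k)%nat -> Rabs (cut_score Sc j x (u ++ c :: v) - cut_score Sc j x (u ++ d :: v)) <= Sdel.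
Proof.
  intros Hu Hv Hx Hc Hd.
  rewrite !(cut_score_swap j x); auto; try (apply is_word_app; auto; constructor; auto).
  apply cut_score_change_x; auto.
Qed.

(** Viewed as a function of the concatenated word [x ++ y], the cut score
    satisfies the bounded-differences condition with constant [||S||_delta]. *)
Lemma bounded_diff_cut_score j N :
  bounded_diff k Sdel (N + N) (fun z => cut_score Sc j (firstn N z) (skipn N z)).
Proof.
  intros u v c d Hu Hv Hc Hd Hl; cbv beta.
  destruct (split_around_letter u v N) as [[_ Hs]|[_ Hs]];
    destruct (Hs c) as [-> ->]; destruct (Hs d) as [-> ->].
  - apply cut_score_change_x; auto; try apply is_word_firstn; try apply is_word_skipn; auto.
  - apply cut_score_change_y; auto; try apply is_word_firstn; try apply is_word_skipn; auto.
Qed.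

End ExpectedScore.

(** * Counting cut patterns *)

Definition block_shapes (n : nat) : list (nat * nat) :=
  flat_map (fun s => map (fun a => (a, s - a)%nat) (seq 0 (S s))) [(n - 1)%nat; n; (n + 1)%nat].

Fixpoint tuples {T} (l : list T) (r : nat) : list (list T) :=
  match r with
  | O => [[]]
  | S r => flat_map (fun t => map (cons t) (tuples l r)) l
  end.

Lemma length_flat_map_const {A B} (f : A -> list B) l c :
  (forall x, In x l -> length (f x) = c) -> length (flat_map f l) = (length l * c)%nat.
Proof. induction l; simpl; intros H; auto. rewrite length_app, H, IHl; auto. Qed.

Lemma tuples_length {T} (l : list T) r : length (tuples l r) = (length l ^ r)%nat.
Proof.
  induction r; simpl; auto.
  rewrite (length_flat_map_const _ _ (length l ^ r)); [lia | intros; rewrite length_map; auto].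
Qed.

Lemma tuples_complete {T} (l : list T) j : Forall (fun t => In t l) j -> In j (tuples l (length j)).
Proof.
  induction j as [|t j IH]; simpl; intros H; auto; inversion H; subst.
  apply in_flat_map; exists t; split; auto; apply in_map; auto.
Qed.

Lemma tuples_sound {T} (l : list T) r j : In j (tuples l r) -> length j = r /\ Forall (fun t => In t l) j.
Proof.
  revert j; induction r; simpl; intros j H.
  - destruct H as [<-|[]]; auto.
  - apply in_flat_map in H; destruct H as [t [Ht H]]; apply in_map_iff in H.
    destruct H as [j' [<- Hj']]; destruct (IHr _ Hj'); split; simpl; auto.
Qed.

Lemma block_shapes_length n : (1 <= n)%nat -> length (block_shapes n) = (3 * n + 3)%nat.
Proof. intros Hn; unfold block_shapes; cbn [flat_map]; rewrite !length_app, !length_map, !length_seq; simpl; lia. Qed.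

Lemma block_shapes_spec n ab : (1 <= n)%nat -> In ab (block_shapes n) <-> near_size n ab.
Proof.
  intros Hn; destruct ab as [a b]; unfold block_shapes, near_size; simpl fst; simpl snd; split.
  - intros H; apply in_flat_map in H; destruct H as [s [Hs H]]; apply in_map_iff in H.
    destruct H as [a' [E Ha]]; injection E as <- <-; apply in_seq in Ha; simpl in Hs; lia.
  - intros H; apply in_flat_map; exists (a + b)%nat; split; [simpl; lia|].
    apply in_map_iff; exists a; split; [f_equal; lia | apply in_seq; lia].
Qed.

Definition cut_patterns (n m : nat) : list (list (nat * nat)) :=
  filter (fun j => andb (Nat.eqb (sum_fst j) (m * n)) (Nat.eqb (sum_snd j) (m * n)))
         (tuples (block_shapes n) (2 * m)).

Lemma cut_patterns_spec n m j : (1 <= n)%nat -> In j (cut_patterns n m) ->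
  length j = (2 * m)%nat /\ Forall (near_size n) j /\ sum_fst j = (m * n)%nat /\ sum_snd j = (m * n)%nat.
Proof.
  intros Hn H; apply filter_In in H; destruct H as [H1 H2].
  apply andb_prop in H2; destruct H2 as [H2 H3]; apply Nat.eqb_eq in H2, H3.
  destruct (tuples_sound _ _ _ H1) as [L F]; repeat split; auto.
  eapply Forall_impl; [|exact F]; intros; apply block_shapes_spec; auto.
Qed.

Lemma cut_patterns_length n m : (1 <= n)%nat -> (length (cut_patterns n m) <= (3 * n + 3) ^ (2 * m))%nat.
Proof.
  intros Hn; eapply Nat.le_trans; [apply filter_length_le|].
  rewrite tuples_length, block_shapes_length; auto.
Qed.

Lemma cut_patterns_cover Sc n m x y : (1 <= n)%nat -> (1 <= m)%nat ->
  length x = (m * n)%nat -> length y = (m * n)%nat ->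
  exists j, In j (cut_patterns n m) /\ Ldp Sc x y <= cut_score Sc j x y.
Proof.
  intros Hn Hm Hx Hy.
  destruct (Ldp_multicut Sc n (2 * m) Hn ltac:(lia) 0 x y ltac:(lia) ltac:(lia))
    as [j [J1 [J2 [J3 [J4 J5]]]]].
  exists j; split; auto; apply filter_In; split.
  - rewrite <- J1; apply tuples_complete; eapply Forall_impl; [|exact J2].
    intros; apply block_shapes_spec; auto.
  - rewrite J3, J4, Hx, Hy, Nat.eqb_refl; reflexivity.
Qed.

(** * The exponential-moment bound on [E L_{mn}] *)

(** Concavity of [ln]: it lies below its tangent at [M]. *)
Lemma ln_tangent w M : 0 < w -> 0 < M -> ln w <= ln M + w / M - 1.
Proof.
  intros Hw HM; pose proof (exp_ineq1_le (ln (w / M))) as H.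
  rewrite exp_ln in H by (apply Rdiv_lt_0_compat; auto).
  assert (ln w = ln (w / M) + ln M)
    by (rewrite <- ln_mult; [f_equal; field; lra | apply Rdiv_lt_0_compat | ]; auto).
  lra.
Qed.

Lemma optimize_theta X C A B : 0 < A -> 0 <= B ->
  (forall th, 0 < th -> X <= C + A / th + B * th) -> X <= C + 2 * sqrt (A * B).
Proof.
  intros HA HB H; destruct (Req_dec B 0) as [-> | HB0].
  - rewrite Rmult_0_r, sqrt_0; apply Rnot_lt_le; intros Hlt.
    specialize (H (2 * A / (X - C)) ltac:(apply Rdiv_lt_0_compat; lra)).
    replace (A / (2 * A / (X - C))) with ((X - C) / 2) in H by (field; lra); lra.
  - assert (HsA : 0 < sqrt A) by (apply sqrt_lt_R0; lra).
    assert (HsB : 0 < sqrt B) by (apply sqrt_lt_R0; lra).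
    specialize (H (sqrt A / sqrt B) ltac:(apply Rdiv_lt_0_compat; auto)).
    rewrite sqrt_mult by lra.
    pose proof (sqrt_sqrt A ltac:(lra)) as EA; pose proof (sqrt_sqrt B ltac:(lra)) as EB.
    set (sa := sqrt A) in *; set (sb := sqrt B) in *.
    replace (A / (sa / sb)) with (sa * sb) in H by (rewrite <- EA; field; lra).
    replace (B * (sa / sb)) with (sa * sb) in H by (rewrite <- EB; field; lra).
    lra.
Qed.

Section MultipleBound.
Variable k : nat.
Variable p : nat -> R.
Hypothesis Hp : is_distribution k p.
Variable Sc : scoring.
Hypothesis Hsym : is_scoring k Sc.
Let Sinf := norm_inf k Sc.
Let Sdel := norm_delta k Sc.

(** Jensen's inequality for [ln], in the form needed for the "soft maximum" [W]. *)
Lemma E2_log_jensen a b F W w0 th : 0 < th -> 0 < w0 ->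
  (forall x y, length x = a -> length y = b -> is_word k x -> is_word k y ->
     w0 <= W x y /\ exp (th * F x y) <= W x y) ->
  E2 k p a b F <= ln (E2 k p a b W) / th.
Proof.
  intros Hth Hw0 HW; set (M := E2 k p a b W).
  assert (HM : w0 <= M).
  { unfold M; rewrite <- (E2_const k p Hp a b w0); apply (E2_le k p Hp); intros; apply HW; auto. }
  apply Rle_trans with (E2 k p a b (fun x y => / th * ((ln M - 1) + / M * W x y))).
  - apply (E2_le k p Hp); intros x y Hx Hy Ox Oy; destruct (HW x y Hx Hy Ox Oy) as [H1 H2].
    assert (th * F x y <= ln (W x y)) by (rewrite <- (ln_exp (th * F x y)); apply ln_le; auto; apply exp_pos).
    pose proof (ln_tangent (W x y) M ltac:(lra) ltac:(lra)).
    apply Rmult_le_reg_l with th; auto; rewrite <- Rmult_assoc, Rinv_r by lra; unfold Rdiv in *; lra.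
  - rewrite E2_scal, E2_plus, E2_const, E2_scal by auto; fold M.
    rewrite Rinv_l by lra; unfold Rdiv; right; ring.
Qed.

(** Exponential moment of the score of a fixed cut pattern: its mean is at most
    [m e(n,n) + 2 m ||S||_inf], and it has bounded differences over [2mn] letters. *)
Lemma mgf_cut_score n m j th : (1 <= n)%nat -> In j (cut_patterns n m) -> 0 < th ->
  E2 k p (m * n) (m * n) (fun x y => exp (th * cut_score Sc j x y)) <=
  exp (th ^ 2 * INR (m * n + m * n) * Sdel ^ 2 / 8) *
  exp (th * (INR m * Escore k p Sc n n + 2 * INR m * Sinf)).
Proof.
  intros Hn HJ Hth; destruct (cut_patterns_spec n m j Hn HJ) as [J1 [J2 [J3 J4]]].
  set (N := (m * n)%nat) in *; set (mu := E2 k p N N (cut_score Sc j)).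
  assert (Hmu : mu <= INR m * Escore k p Sc n n + 2 * INR m * Sinf).
  { unfold mu; rewrite <- J3 at 1; rewrite <- J4, (E2_cut_score k p Hp).
    apply (Escore_blocks k p Hp Sc Hsym); auto; lia. }
  rewrite (E2_ext k p N N _ (fun x y => exp (th * mu) * exp (th * (cut_score Sc j x y - mu))))
    by (intros; rewrite <- exp_plus; f_equal; ring).
  rewrite E2_scal, Rmult_comm; apply Rmult_le_compat.
  - rewrite <- (E2_const k p Hp N N 0); apply (E2_le k p Hp); intros; left; apply exp_pos.
  - left; apply exp_pos.
  - unfold mu; rewrite !E2_as_Ew.
    apply (mgf_bounded_diff k p Hp Sdel (N + N)); [apply bounded_diff_cut_score | lra]; auto.
  - apply exp_le, Rmult_le_compat_l; lra.
Qed.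

Definition soft_max (n m : nat) (th : R) (x y : list nat) : R :=
  sumR (map (fun j => exp (th * cut_score Sc j x y)) (cut_patterns n m)).

Lemma soft_max_bounds n m th x y : (1 <= n)%nat -> (1 <= m)%nat -> 0 < th ->
  length x = (m * n)%nat -> length y = (m * n)%nat -> is_word k x -> is_word k y ->
  exp (th * (- INR (m * n + m * n) * Sinf)) <= soft_max n m th x y /\
  exp (th * Ldp Sc x y) <= soft_max n m th x y.
Proof.
  intros Hn Hm Hth Hx Hy Ox Oy.
  destruct (cut_patterns_cover Sc n m x y Hn Hm Hx Hy) as [j [Hj Hc]].
  assert (H1 : exp (th * Ldp Sc x y) <= soft_max n m th x y).
  { apply Rle_trans with (exp (th * cut_score Sc j x y)); [apply exp_le, Rmult_le_compat_l; lra|].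
    apply (sumR_ge_term (fun j => exp (th * cut_score Sc j x y))); auto; intros; left; apply exp_pos. }
  pose proof (Ldp_lower k Sc x y Ox Oy) as Hlow; rewrite Hx, Hy in Hlow; fold Sinf in Hlow.
  split; [|exact H1].
  apply Rle_trans with (exp (th * Ldp Sc x y)); [apply exp_le, Rmult_le_compat_l; lra | exact H1].
Qed.

(** Union bound: at most [(3n+3)^(2m)] patterns, each controlled by [mgf_cut_score]. *)
Lemma E2_soft_max_bound n m th : (1 <= n)%nat -> 0 < th ->
  E2 k p (m * n) (m * n) (soft_max n m th) <=
  INR ((3 * n + 3) ^ (2 * m)) * (exp (th ^ 2 * INR (m * n + m * n) * Sdel ^ 2 / 8) *
                                 exp (th * (INR m * Escore k p Sc n n + 2 * INR m * Sinf))).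
Proof.
  intros Hn Hth; unfold soft_max; rewrite (E2_sum k p Hp); eapply Rle_trans.
  - apply sumR_le_length; intros j Hj; apply mgf_cut_score; auto.
  - apply Rmult_le_compat_r; [left; apply Rmult_lt_0_compat; apply exp_pos|].
    apply le_INR, cut_patterns_length; auto.
Qed.

(** Main estimate: Jensen applied to the soft maximum, then optimisation over [th]. *)
Lemma Escore_multiple_bound n m : (1 <= n)%nat -> (1 <= m)%nat ->
  Escore k p Sc (m * n) (m * n) <= (INR m * Escore k p Sc n n + 2 * INR m * Sinf) +
     2 * sqrt ((INR (2 * m) * ln (INR (3 * n + 3))) * (INR (m * n + m * n) * Sdel ^ 2 / 8)).
Proof.
  intros Hn Hm; set (N := (m * n)%nat).
  set (C := INR m * Escore k p Sc n n + 2 * INR m * Sinf).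
  set (A := INR (2 * m) * ln (INR (3 * n + 3))); set (B := INR (N + N) * Sdel ^ 2 / 8).
  assert (HA : 0 < A).
  { apply Rmult_lt_0_compat; [apply lt_0_INR; lia|].
    rewrite <- ln_1; apply ln_increasing; [lra | apply lt_1_INR; lia]. }
  assert (HB : 0 <= B) by (pose proof (pos_INR (N + N)); pose proof (pow2_ge_0 Sdel); unfold B; nra).
  apply optimize_theta; auto; intros th Hth.
  set (M := E2 k p N N (soft_max n m th)).
  set (w0 := exp (th * (- INR (N + N) * Sinf))).
  assert (HlnM : Escore k p Sc N N <= ln M / th).
  { apply (E2_log_jensen _ _ _ _ w0); [auto | apply exp_pos|]; intros; apply soft_max_bounds; auto. }
  assert (HM0 : 0 < M).
  { apply Rlt_le_trans with w0; [apply exp_pos|].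
    rewrite <- (E2_const k p Hp N N w0); apply (E2_le k p Hp); intros; apply soft_max_bounds; auto. }
  assert (HlnMT : ln M <= A + th ^ 2 * B + th * C).
  { eapply Rle_trans; [apply ln_le; [exact HM0 | apply E2_soft_max_bound; auto]|].
    assert (Hcount : 0 < INR ((3 * n + 3) ^ (2 * m))) by (apply lt_0_INR, Nat.neq_0_lt_0, Nat.pow_nonzero; lia).
    rewrite !ln_mult by (auto; apply exp_pos || (apply Rmult_lt_0_compat; apply exp_pos)).
    rewrite !ln_exp, pow_INR, ln_pow by (apply lt_0_INR; lia).
    unfold A, B, C, N; right; unfold Rdiv; ring. }
  apply Rle_trans with (ln M / th); auto.
  apply Rmult_le_reg_l with th; auto; unfold Rdiv.
  replace (th * (ln M * / th)) with (ln M) by (field; lra).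
  replace (th * (C + A * / th + B * th)) with (A + th ^ 2 * B + th * C) by (field; lra); auto.
Qed.

End MultipleBound.

(** A bounded sequence that is almost above its own later values has a limit,
    namely its supremum, with explicit two-sided error [e n]. *)
Lemma limit_of_sup_sandwich (u e : nat -> R) (B : R) :
  (forall n, (1 <= n)%nat -> u n <= B) ->
  (forall n n', (2 <= n)%nat -> (1 <= n')%nat -> u n' <= u n + e n) ->
  Un_cv e 0 ->
  exists lam, Un_cv u lam /\ forall n, (2 <= n)%nat -> u n <= lam /\ lam <= u n + e n.
Proof.
  intros HB Hsand He.
  set (Vals := fun r => exists n, (1 <= n)%nat /\ r = u n).
  destruct (completeness Vals) as [lam [Hub Hlub]].
  - exists B; intros r [n [Hn ->]]; auto.
  - exists (u 1%nat), 1%nat; auto.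
  - assert (Hsand' : forall n, (2 <= n)%nat -> u n <= lam /\ lam <= u n + e n).
    { intros n Hn; split; [apply Hub; exists n; split; auto; lia|].
      apply Hlub; intros r [n' [Hn' ->]]; auto. }
    exists lam; split; auto.
    intros eps Heps; destruct (He eps Heps) as [N HN]; exists (max N 2); intros n Hn.
    specialize (HN n ltac:(lia)); destruct (Hsand' n ltac:(lia)); unfold R_dist in *.
    rewrite Rminus_0_r in HN; revert HN; split_Rabs; lra.
Qed.

Lemma ln_le_2sqrt y : 0 < y -> ln y <= 2 * sqrt y.
Proof.
  intros Hy; assert (Hs : 0 < sqrt y) by (apply sqrt_lt_R0; auto).
  assert (ln y = 2 * ln (sqrt y)) by (rewrite <- (sqrt_sqrt y) at 1 by lra; rewrite ln_mult by auto; ring).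
  pose proof (exp_ineq1_le (ln (sqrt y))); rewrite exp_ln in * by auto; lra.
Qed.

Lemma ln_nonneg x : 1 <= x -> 0 <= ln x.
Proof. intros; rewrite <- ln_1; apply ln_le; lra. Qed.

(** The constant [c_n] of the theorem is designed so that
    [c_n sqrt (ln n) = sqrt (2 ln (3 (n + 2)))]. *)
Lemma c_n_sqrt_ln n : (2 <= n)%nat -> c_n n * sqrt (ln (INR n)) = sqrt (2 * ln 3 + 2 * ln (INR n + 2)).
Proof.
  intros Hn; unfold c_n; pose proof (le_INR 2 n ltac:(lia)) as Hn'; simpl INR in Hn'.
  assert (Hl : 0 < ln (INR n)) by (rewrite <- ln_1; apply ln_increasing; lra).
  pose proof (ln_nonneg 3 ltac:(lra)); pose proof (ln_nonneg (INR n + 2) ltac:(lra)).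
  rewrite <- sqrt_mult; [f_equal; field; lra | | lra].
  apply Rmult_le_pos; [lra | left; apply Rinv_0_lt_compat; auto].
Qed.

Lemma fourth_root_pow x : 0 <= x -> sqrt (sqrt x) * sqrt (sqrt x) * (sqrt (sqrt x) * sqrt (sqrt x)) = x.
Proof. intros; rewrite !sqrt_sqrt; auto; apply sqrt_pos. Qed.

Lemma sqrt_square_mult a b : 0 <= a -> 0 <= b -> sqrt (a * a * b) = a * sqrt b.
Proof. intros; rewrite sqrt_mult, sqrt_square by nra; auto. Qed.

Section Rate.
Variable k : nat.
Variable p : nat -> R.
Hypothesis Hp : is_distribution k p.
Variable Sc : scoring.
Hypothesis Hsym : is_scoring k Sc.
Let Sinf := norm_inf k Sc.
Let Sdel := norm_delta k Sc.

Definition rate (n : nat) : R :=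
  c_n n * Sdel * sqrt (ln (INR n)) / sqrt (INR n) + 2 * Sinf / INR n.

Lemma lambda_n_Escore n : lambda_n k p Sc n = Escore k p Sc n n / INR n.
Proof. unfold lambda_n; rewrite ELn_E2; reflexivity. Qed.

Lemma Escore_multiple_sqrt n m : (1 <= n)%nat -> (1 <= m)%nat ->
  Escore k p Sc (m * n) (m * n) <=
  INR m * Escore k p Sc n n + 2 * INR m * Sinf + INR m * Sdel * sqrt (2 * INR n * ln (INR (3 * n + 3))).
Proof.
  intros Hn Hm; eapply Rle_trans; [apply (Escore_multiple_bound k p Hp Sc Hsym n m Hn Hm)|].
  fold Sinf Sdel; apply Rplus_le_compat_l, Req_le.
  pose proof (norm_delta_nonneg k Sc) as HD; fold Sdel in HD; pose proof (pos_INR m); pose proof (pos_INR n).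
  pose proof (ln_nonneg (INR (3 * n + 3)) ltac:(apply (le_INR 1); lia)).
  set (L := ln (INR (3 * n + 3))) in *.
  replace (INR (2 * m) * L * (INR (m * n + m * n) * Sdel ^ 2 / 8))
    with (INR m * Sdel / 2 * (INR m * Sdel / 2) * (2 * INR n * L))
    by (rewrite plus_INR, !mult_INR; simpl; field).
  assert (0 <= INR m * Sdel / 2) by (apply Rmult_le_pos; [apply Rmult_le_pos|]; lra).
  assert (0 <= 2 * INR n * L) by (apply Rmult_le_pos; lra).
  rewrite sqrt_square_mult by auto; field.
Qed.

(** The logarithmic factor produced by the counting argument is dominated by [c_n]. *)
Lemma log_term_le_c_n n : (2 <= n)%nat ->
  sqrt (2 * INR n * ln (INR (3 * n + 3))) / INR n <= c_n n * sqrt (ln (INR n)) / sqrt (INR n).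
Proof.
  intros Hn; rewrite c_n_sqrt_ln by auto.
  pose proof (le_INR 2 n ltac:(lia)) as Hn'; simpl INR in Hn'.
  assert (Hs : 0 < sqrt (INR n)) by (apply sqrt_lt_R0; lra).
  assert (HL : ln (INR (3 * n + 3)) <= ln 3 + ln (INR n + 2)).
  { rewrite <- ln_mult by lra; apply ln_le; [apply lt_0_INR; lia|].
    rewrite plus_INR, mult_INR; simpl; lra. }
  pose proof (ln_nonneg (INR (3 * n + 3)) ltac:(apply (le_INR 1); lia)).
  replace (2 * INR n * ln (INR (3 * n + 3))) with (INR n * (2 * ln (INR (3 * n + 3)))) by ring.
  rewrite sqrt_mult by lra.
  replace (sqrt (INR n) * sqrt (2 * ln (INR (3 * n + 3))) / INR n)
    with (sqrt (2 * ln (INR (3 * n + 3))) / sqrt (INR n))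
    by (rewrite <- (sqrt_sqrt (INR n)) at 3 by lra; field; lra).
  unfold Rdiv; apply Rmult_le_compat_r; [left; apply Rinv_0_lt_compat; auto|].
  apply sqrt_le_1_alt; lra.
Qed.

Lemma lambda_multiple_le n m : (2 <= n)%nat -> (1 <= m)%nat ->
  lambda_n k p Sc (m * n) <= lambda_n k p Sc n + rate n.
Proof.
  intros Hn Hm; rewrite !lambda_n_Escore.
  pose proof (Escore_multiple_sqrt n m ltac:(lia) Hm) as HB.
  pose proof (log_term_le_c_n n Hn) as Hlog.
  pose proof (norm_delta_nonneg k Sc) as HD; fold Sdel in HD.
  pose proof (le_INR 2 n ltac:(lia)) as Hn'; pose proof (le_INR 1 m Hm) as Hm'; simpl INR in Hn', Hm'.
  assert (Hs : 0 < sqrt (INR n)) by (apply sqrt_lt_R0; lra).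
  set (Q := sqrt (2 * INR n * ln (INR (3 * n + 3)))) in *.
  set (e := Escore k p Sc n n) in *.
  apply Rle_trans with ((INR m * e + 2 * INR m * Sinf + INR m * Sdel * Q) / INR (m * n)).
  - unfold Rdiv; apply Rmult_le_compat_r; auto.
    left; apply Rinv_0_lt_compat; rewrite mult_INR; nra.
  - rewrite mult_INR.
    replace ((INR m * e + 2 * INR m * Sinf + INR m * Sdel * Q) / (INR m * INR n))
      with (e / INR n + 2 * Sinf / INR n + Sdel * (Q / INR n)) by (field; lra).
    unfold rate; fold Sinf Sdel.
    replace (c_n n * Sdel * sqrt (ln (INR n)) / sqrt (INR n))
      with (Sdel * (c_n n * sqrt (ln (INR n)) / sqrt (INR n))) by (field; lra).
    pose proof (Rmult_le_compat_l Sdel _ _ HD Hlog); lra.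
Qed.

(** Superadditivity makes [lambda] non-decreasing along multiples. *)
Lemma Escore_multiple_lower m n : INR m * Escore k p Sc n n <= Escore k p Sc (m * n) (m * n).
Proof.
  induction m as [|m IH].
  - unfold Escore, E2; rewrite !Ew_O; simpl; lra.
  - rewrite S_INR; replace (S m * n)%nat with (n + m * n)%nat by lia.
    pose proof (Escore_superadd k p Hp Sc n (m * n) n (m * n)); lra.
Qed.

Lemma lambda_le_multiple m n : (1 <= m)%nat -> (1 <= n)%nat ->
  lambda_n k p Sc n <= lambda_n k p Sc (m * n).
Proof.
  intros Hm Hn; rewrite !lambda_n_Escore, mult_INR.
  pose proof (Escore_multiple_lower m n).
  pose proof (le_INR 1 m Hm); pose proof (le_INR 1 n Hn); simpl INR in *.
  apply Rmult_le_reg_r with (INR m * INR n); [nra|].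
  replace (Escore k p Sc n n / INR n * (INR m * INR n)) with (INR m * Escore k p Sc n n) by (field; lra).
  replace (Escore k p Sc (m * n) (m * n) / (INR m * INR n) * (INR m * INR n))
    with (Escore k p Sc (m * n) (m * n)) by (field; lra); auto.
Qed.

(** [lambda_n <= 2 ||S||_inf], since every letter contributes at most [||S||_inf]. *)
Lemma lambda_bounded n : (1 <= n)%nat -> lambda_n k p Sc n <= 2 * Sinf.
Proof.
  intros Hn; rewrite lambda_n_Escore; pose proof (le_INR 1 n Hn); simpl INR in *.
  assert (HE : Escore k p Sc n n <= INR (n + n) * Sinf).
  { unfold Escore; rewrite <- (E2_const k p Hp n n (INR (n + n) * Sinf)).
    apply (E2_le k p Hp); intros x y Hx Hy Ox Oy.
    pose proof (Ldp_upper k Sc x y Ox Oy) as Hup; rewrite Hx, Hy in Hup; auto. }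
  rewrite plus_INR in HE; apply Rmult_le_reg_r with (INR n); [lra|].
  unfold Rdiv; rewrite Rmult_assoc, Rinv_l by lra; lra.
Qed.

(** The rate is [O(n^(-1/4))]: since [ln y <= 2 sqrt y], both of its terms are
    at most a constant over [n^(1/4)]. *)
Lemma rate_le_quartic n : (2 <= n)%nat ->
  0 <= rate n <= (sqrt 12 * Sdel + 2 * Sinf) / sqrt (sqrt (INR n)).
Proof.
  intros Hn; pose proof (le_INR 2 n ltac:(lia)) as Hn'; simpl INR in Hn'.
  pose proof (norm_delta_nonneg k Sc) as HD; pose proof (norm_inf_nonneg k Sc) as HI; fold Sdel Sinf in HD, HI.
  set (R := sqrt (2 * ln 3 + 2 * ln (INR n + 2))).
  pose proof (fourth_root_pow (INR n) (pos_INR n)) as Hn4; symmetry in Hn4.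
  set (s := sqrt (sqrt (INR n))) in Hn4 |- *.
  assert (Hsn : sqrt (INR n) = s * s) by (unfold s; rewrite sqrt_sqrt; auto; apply sqrt_pos).
  assert (Hs1 : 1 <= s).
  { assert (Hs0 : 0 <= s) by apply sqrt_pos.
    apply Rnot_lt_le; intros Hlt; assert (s * s <= 1) by nra; nra. }
  assert (HR : 0 <= R <= sqrt 12 * s).
  { pose proof (ln_nonneg 3 ltac:(lra)); pose proof (ln_nonneg (INR n + 2) ltac:(lra)).
    split; [apply sqrt_pos|]; rewrite <- (sqrt_square s), <- sqrt_mult by nra; apply sqrt_le_1_alt.
    replace (2 * ln 3 + 2 * ln (INR n + 2)) with (2 * ln (3 * (INR n + 2))) by (rewrite ln_mult by lra; ring).
    pose proof (ln_le_2sqrt (3 * (INR n + 2)) ltac:(lra)).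
    assert (sqrt (3 * (INR n + 2)) <= 3 * (s * s)).
    { assert (E9 : sqrt (9 * INR n) = 3 * sqrt (INR n)).
      { rewrite sqrt_mult by lra; f_equal; replace 9 with (3 * 3) by ring; apply sqrt_square; lra. }
      rewrite <- Hsn, <- E9; apply sqrt_le_1_alt; lra. }
    lra. }
  unfold rate; fold Sdel Sinf; rewrite Rmult_assoc, (Rmult_comm Sdel), <- Rmult_assoc, c_n_sqrt_ln by auto.
  fold R; rewrite Hsn, Hn4.
  assert (Ht1 : (R * Sdel) / (s * s) <= sqrt 12 * Sdel / s).
  { apply Rmult_le_reg_r with (s * s); [nra|].
    unfold Rdiv; rewrite Rmult_assoc, Rinv_l by nra.
    replace (sqrt 12 * Sdel * / s * (s * s)) with (sqrt 12 * s * Sdel) by (field; lra); nra. }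
  assert (Ht2 : 2 * Sinf / (s * s * (s * s)) <= 2 * Sinf / s).
  { assert (s <= s * s) by nra; assert (s * s <= s * s * (s * s)) by nra.
    apply Rmult_le_compat_l; [lra|]; apply Rinv_le_contravar; lra. }
  split.
  - apply Rplus_le_le_0_compat; apply Rmult_le_pos; try apply Rmult_le_pos; try lra;
      left; apply Rinv_0_lt_compat; nra.
  - replace ((sqrt 12 * Sdel + 2 * Sinf) / s) with (sqrt 12 * Sdel / s + 2 * Sinf / s) by (field; lra); lra.
Qed.

Lemma rate_vanishes : Un_cv rate 0.
Proof.
  intros eps Heps; set (K := sqrt 12 * Sdel + 2 * Sinf).
  assert (HK : 0 <= K).
  { pose proof (norm_delta_nonneg k Sc) as HD; pose proof (norm_inf_nonneg k Sc) as HI.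
    pose proof (sqrt_pos 12); fold Sdel Sinf in HD, HI; unfold K; nra. }
  set (x := K / eps).
  assert (Hx : 0 <= x) by (apply Rmult_le_pos; [lra | left; apply Rinv_0_lt_compat; lra]).
  destruct (INR_unbounded (x * x * (x * x))) as [N HN].
  exists (max N 2); intros n Hn; unfold R_dist; rewrite Rminus_0_r.
  destruct (rate_le_quartic n ltac:(lia)) as [H0 H1]; fold K in H1; rewrite Rabs_right by lra.
  pose proof (le_INR N n ltac:(lia)) as HNn.
  pose proof (fourth_root_pow (INR n) (pos_INR n)) as Hn4.
  set (s := sqrt (sqrt (INR n))) in Hn4, H1; assert (Hs0 : 0 <= s) by apply sqrt_pos.
  assert (Hxs : x < s).
  { apply Rnot_le_lt; intros Hle.
    assert (s * s <= x * x) by (apply Rmult_le_compat; lra).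
    assert (s * s * (s * s) <= x * x * (x * x)) by (apply Rmult_le_compat; nra); lra. }
  eapply Rle_lt_trans; [exact H1|].
  apply Rmult_lt_reg_r with s; [lra|]; unfold Rdiv; rewrite Rmult_assoc, Rinv_l by lra.
  unfold x in Hxs; apply Rmult_lt_compat_l with (r := eps) in Hxs; auto.
  replace (eps * (K / eps)) with K in Hxs by (field; lra); lra.
Qed.

End Rate.

Theorem mainTheorem9 (k : nat) (p : nat -> R) (S : scoring) :
  is_distribution k p -> is_scoring k S ->
  exists lam : R,
    Un_cv (lambda_n k p S) lam /\
    forall n : nat, (2 <= n)%nat ->
      lambda_n k p S n <= lam /\
      lam <= lambda_n k p S n
             + c_n n * norm_delta k S * sqrt (ln (INR n)) / sqrt (INR n)
             + 2 * norm_inf k S / INR n.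
Proof.
  intros Hp Hsym.
  destruct (limit_of_sup_sandwich (lambda_n k p S) (rate k S) (2 * norm_inf k S)) as [lam [Hcv Hlam]].
  - apply (lambda_bounded k p Hp S).
  - intros n n' Hn Hn'.
    eapply Rle_trans; [apply (lambda_le_multiple k p Hp S n n'); lia|].
    rewrite Nat.mul_comm; apply (lambda_multiple_le k p Hp S Hsym); auto.
  - apply (rate_vanishes k S).
  - exists lam; split; auto; intros n Hn.
    destruct (Hlam n Hn) as [Hlow Hup]; unfold rate in Hup; split; lra.
Qed.
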